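(* With the notation of the context, for all $\tau=u+iv\in\mathbb{H}$ and $z=x+iy\in\mathbb{H}$, $$\xi_{1/2,\tau}\,\Theta_{\Delta,r}(\tau,z,\varphi)=4i\sqrt{N}\,y^2\frac{\partial}{\partial z}\overline{\Theta_{\Delta,r}(\tau,z,\varphi_{\mathrm{Sh}})}.$$
   Context: Let $N\ge1$. Let $V$ be the space of rational $2\times2$ trace-zero matrices with $Q(\lambda)=N\det\lambda$ and $(\lambda,\mu)=-N\operatorname{tr}(\lambda\mu)$. Let $L=\{\begin{pmatrix}b&-a/N\\c&-b\end{pmatrix}:a,b,c\in\mathbb{Z}\}$, $L'=\{\begin{pmatrix}b/2N&-a/N\\c&-b/2N\end{pmatrix}:a,b,c\in\mathbb{Z}\}$, so $L'/L\cong\mathbb{Z}/2N\mathbb{Z}$ with quadratic form $x\mapsto -x^2/4N$. For $z=x+iy$ let $\lambda(z)=\frac1{\sqrt N y}\begin{pmatrix}-x&|z|^2\\-1&x\end{pmatrix}$, $p_z(\lambda)=(\lambda,\lambda(z))$, $R(\lambda,z)=\frac12p_z(\lambda)^2-(\lambda,\lambda)$. Let $\Delta$ be a fundamental discriminant, $r\in\mathbb{Z}$ with $\Delta\equiv r^2\pmod{4N}$, $Q_\Delta=Q/|\Delta|$, $\mathcal{D}(\Delta)=L'/\Delta L$, $\pi:\mathcal{D}(\Delta)\to L'/L$ the projection. The genus character: for $\delta=\begin{pmatrix}b/2N&-a/N\\c&-b/2N\end{pmatrix}\in L'$, $\chi_\Delta(\delta)=\left(\frac{\Delta}{n}\right)$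 if $\Delta\mid b^2-4Nac$, $(b^2-4Nac)/\Delta$ is a square mod $4N$ and $\gcd(a,b,c,\Delta)=1$, where $n$ is any integer prime to $\Delta$ represented by one of the forms $[N_1a,b,N_2c]$ with $N_1N_2=N$, $N_i>0$; otherwise $\chi_\Delta(\delta)=0$ (it depends only on $\delta$ mod $\Delta L$). For $\tau=u+iv$ put $\varphi(\lambda,\tau,z)=e^{2\pi iQ_\Delta(\lambda)\tau}\sqrt v\,p_z(\lambda)e^{-2\pi vR(\lambda,z)/|\Delta|}$ and, writing $\lambda=\begin{pmatrix}b/2N&-a/N\\c&-b/2N\end{pmatrix}$, $\varphi_{\mathrm{Sh}}(\lambda,\tau,z)=-\frac{cN\bar z^2-b\bar z+a}{4Ny^2}e^{-2\pi vR(\lambda,z)/|\Delta|}e^{2\pi iQ_\Delta(\lambda)\tau}$. For $\psi\in\{\varphi,\varphi_{\mathrm{Sh}}\}$, $\Theta_{\Delta,r}(\tau,z,\psi)=v^{1/2}\sum_{h\in L'/L}\sum_{\delta}\chi_\Delta(\delta)\sum_{\lambda\in\Delta L+\delta}\psi(\lambda,\tau,z)\mathfrak{e}_h$, where $\delta$ runs over $\mathcal{D}(\Delta)$ with $\pi(\delta)=rh$ and $Q_\Delta(\delta)\equiv\operatorname{sgn}(\Delta)Q(h)\pmod{\mathbb{Z}}$, and $\mathfrak{e}_h$ is the standard basis of $\mathbb{C}[L'/L]$. $\xi_{1/2,\tau}f=-2iv^{1/2}\overline{\partial f/\partial\bar\tau}$, applied componentwise. *)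

From Stdlib Require Import Reals ZArith Znumtheory List Lia Lra.
From Stdlib Require Import ClassicalEpsilon.
From Coquelicot Require Import Coquelicot.
Import ListNotations.

Open Scope R_scope.

Definition zrange (lo : Z) (n : nat) : list Z :=
  map (fun k => (lo + Z.of_nat k)%Z) (seq 0 n).

Definition squarefree (m : Z) : Prop :=
  forall p : Z, prime p -> ~ (p * p | m)%Z.

Definition fund_disc (D : Z) : Prop :=
  ((D mod 4 = 1)%Z /\ squarefree D) \/
  (exists m : Z, D = (4 * m)%Z /\ ((m mod 4 = 2)%Z \/ (m mod 4 = 3)%Z) /\ squarefree m).

Definition legendre (a p : Z) : Z :=
  if Z.eq_dec (a mod p) 0 then 0%Z
  else if excluded_middle_informative (exists t : Z, ((t * t - a) mod p = 0)%Z)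
       then 1%Z else (-1)%Z.

Definition kron2 (a : Z) : Z :=
  if Z.even a then 0%Z
  else if orb (Z.eqb (a mod 8) 1) (Z.eqb (a mod 8) 7) then 1%Z else (-1)%Z.

Definition kron_prime (a p : Z) : Z :=
  if Z.eq_dec p 2 then kron2 a else legendre a p.

(* p-adic valuation of n <> 0, p >= 2 *)
Fixpoint pval_aux (fuel : nat) (p n : Z) : nat :=
  match fuel with
  | O => O
  | S f => if Z.eqb (n mod p) 0 then S (pval_aux f p (n / p)) else O
  end.
Definition pval (p n : Z) : nat := pval_aux (Z.to_nat (Z.abs n)) p n.

(* Kronecker symbol (a/n), n in Z:
   (a/n) = (a/u) * prod_{p prime} (a/p)^{v_p(n)}, n = u * prod p^{v_p(n)}, u = +-1,
   with (a/-1) = -1 if a < 0 and 1 otherwise; (a/0) = 1 if a = +-1, 0 otherwise. *)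
Definition kronecker (a n : Z) : Z :=
  if Z.eq_dec n 0 then (if Z.eq_dec (Z.abs a) 1 then 1%Z else 0%Z)
  else
    ((if Z.ltb n 0 then (if Z.ltb a 0 then (-1)%Z else 1%Z) else 1%Z) *
     fold_right Z.mul 1%Z
       (map (fun p => if prime_dec p then (kron_prime a p ^ Z.of_nat (pval p n))%Z else 1%Z)
            (zrange 2 (Z.to_nat (Z.abs n - 1)))))%Z.

(* delta = [[b/2N, -a/N],[c, -b/2N]] in L' is encoded by (a,b,c) in Z^3 *)

Definition genus_cond (N D a b c : Z) : Prop :=
  (D | b * b - 4 * N * a * c)%Z /\
  (exists t : Z, (4 * N | (b * b - 4 * N * a * c) / D - t * t)%Z) /\
  Z.gcd (Z.gcd (Z.gcd a b) c) D = 1%Z.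

Definition represented (N a b c n : Z) : Prop :=
  exists N1 N2 x y : Z, (0 < N1)%Z /\ (0 < N2)%Z /\ (N1 * N2 = N)%Z /\
    n = (N1 * a * x * x + b * x * y + N2 * c * y * y)%Z.

(* chi_Delta(delta): (Delta/n) for any n prime to Delta represented by one of the
   forms, when genus_cond holds; 0 otherwise.  (Well-definedness is part of the
   theory; we pick such an n by choice.) *)
Definition chi (N D a b c : Z) : Z :=
  epsilon (inhabits 0%Z) (fun e =>
    (genus_cond N D a b c /\
       exists n : Z, Z.gcd n D = 1%Z /\ represented N a b c n /\ e = kronecker D n) \/
    (~ genus_cond N D a b c /\ e = 0%Z)).

Record mat2 := Mat2 { m11 : R; m12 : R; m21 : R; m22 : R }.

Definition tr_mul (A B : mat2) : R :=
  m11 A * m11 B + m12 A * m21 B + m21 A * m12 B + m22 A * m22 B.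
Definition det2 (A : mat2) : R := m11 A * m22 A - m12 A * m21 A.

Definition Qf (N : Z) (A : mat2) : R := IZR N * det2 A.
Definition bil (N : Z) (A B : mat2) : R := - IZR N * tr_mul A B.

Definition lamL' (N a b c : Z) : mat2 :=
  Mat2 (IZR b / (2 * IZR N)) (- IZR a / IZR N) (IZR c) (- IZR b / (2 * IZR N)).

Definition lam_z (N : Z) (z : C) : mat2 :=
  let x := Re z in let y := Im z in
  let s := / (sqrt (IZR N) * y) in
  Mat2 (s * - x) (s * (x ^ 2 + y ^ 2)) (s * -1) (s * x).

Definition p_z (N : Z) (z : C) (A : mat2) : R := bil N A (lam_z N z).
Definition Rf (N : Z) (A : mat2) (z : C) : R := / 2 * p_z N z A ^ 2 - bil N A A.
Definition QD (N D : Z) (A : mat2) : R := Qf N A / IZR (Z.abs D).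

Open Scope C_scope.

Definition cexp (w : C) : C := (exp (Re w) * cos (Im w), exp (Re w) * sin (Im w))%R.

Definition csum {A : Type} (l : list A) (f : A -> C) : C :=
  fold_right (fun x acc => f x + acc) (RtoC 0) l.

Definition box_sum (f : Z -> Z -> Z -> C) (n : nat) : C :=
  let I := zrange (- Z.of_nat n) (2 * n + 1) in
  csum I (fun k1 => csum I (fun k2 => csum I (fun k3 => f k1 k2 k3))).

(* lattice sum over Z^3 (absolutely convergent in our use), as the limit of box sums *)
Definition lattice_sum (f : Z -> Z -> Z -> C) : C :=
  (real (Lim_seq (fun n => Re (box_sum f n))), real (Lim_seq (fun n => Im (box_sum f n))))%R.

Definition phi (N D : Z) (a b c : Z) (tau z : C) : C :=
  let lam := lamL' N a b c in
  let v := Im tau in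
  cexp (2 * PI * Ci * RtoC (QD N D lam) * tau) * RtoC (sqrt v) * RtoC (p_z N z lam)
  * RtoC (exp (- 2 * PI * v * Rf N lam z / IZR (Z.abs D))).

Definition phiSh (N D : Z) (a b c : Z) (tau z : C) : C :=
  let lam := lamL' N a b c in
  let v := Im tau in let y := Im z in
  let zb := Cconj z in
  - ((RtoC (IZR c) * RtoC (IZR N) * zb * zb - RtoC (IZR b) * zb + RtoC (IZR a))
      / RtoC (4 * IZR N * y ^ 2))
  * RtoC (exp (- 2 * PI * v * Rf N lam z / IZR (Z.abs D)))
  * cexp (2 * PI * Ci * RtoC (QD N D lam) * tau).

(* h-component (h representing an element of L'/L = Z/2NZ) of
   Theta_{D,r}(tau,z,psi) = v^{1/2} sum_h sum_delta chi(delta) sum_{lambda in D L + delta} psi(lambda) e_h,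
   delta running over D(Delta) = L'/Delta L (representatives (a,b,c) with
   0 <= a,c < |D|, 0 <= b < 2N|D|) with pi(delta) = r h and
   Q_D(delta) = sgn(D) Q(h) mod Z, where Q(h) = - h^2 / 4N.
   Delta L consists of (D a', 2 N D b', D c'). *)

Definition Theta (N D r : Z) (psi : Z -> Z -> Z -> C -> C -> C) (tau z : C) (h : Z) : C :=
  let AD := Z.to_nat (Z.abs D) in
  RtoC (sqrt (Im tau)) *
  csum (zrange 0 AD) (fun a =>
  csum (zrange 0 (Z.to_nat (2 * N) * AD)) (fun b =>
  csum (zrange 0 AD) (fun c =>
    if excluded_middle_informative
         ((2 * N | b - r * h)%Z /\
          exists k : Z, (QD N D (lamL' N a b c) - IZR (Z.sgn D) * (- IZR (h * h) / (4 * IZR N)))%R = IZR k)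
    then RtoC (IZR (chi N D a b c)) *
         lattice_sum (fun k1 k2 k3 =>
           psi (a + D * k1)%Z (b + 2 * N * D * k2)%Z (c + D * k3)%Z tau z)
    else RtoC 0))).

Definition dR (F : R -> C) (t : R) : C :=
  (Derive (fun s => Re (F s)) t, Derive (fun s => Im (F s)) t).

Definition dbar (F : C -> C) (w : C) : C :=
  / 2 * (dR (fun s => F (s, Im w)) (Re w) + Ci * dR (fun s => F (Re w, s)) (Im w)).
Definition dhol (F : C -> C) (w : C) : C :=
  / 2 * (dR (fun s => F (s, Im w)) (Re w) - Ci * dR (fun s => F (Re w, s)) (Im w)).

Definition xi_half (F : C -> C) (tau : C) : C :=
  - 2 * Ci * RtoC (sqrt (Im tau)) * Cconj (dbar F tau).

Close Scope C_scope.

(* Both sides are finite sums, over the classes delta in L'/Delta L, of chi_Delta(delta) times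
   lattice sums over lambda in Delta L + delta, and the identity holds term by term: for each
   lambda, xi_{1/2} of sqrt v * phi(lambda) equals 4 i sqrt N y^2 d/dz of the conjugate of
   sqrt v * phi_Sh(lambda), a direct computation (xi_term_eq_dz_term).  What remains is to
   differentiate the lattice sums termwise.  Writing lambda = (A, B, C), both terms carry the
   Gaussian factor exp (- pi v S / (2 N y^2 |Delta|)), where
   S = N y^2 p_z(lambda)^2 + |C N z^2 - B z + A|^2 is a positive definite form in (A, B, C) with
   constants uniform for z in compact sets.  The terms and their partial derivatives are
   polynomials in S times this Gaussian, so near (tau, z) they are dominated by one summable
   Gaussian majorant, and the box sums defining lattice_sum converge uniformly together with
   their derivatives. *)

From Stdlib Require Import Reals ZArith List Lia Lra Psatz ClassicalEpsilon.
From Coquelicot Require Import Coquelicot.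
Open Scope R_scope.

Definition rsum {A : Type} (l : list A) (f : A -> R) : R :=
  fold_right (fun x acc => f x + acc) 0 l.

Lemma rsum_ext_in {A} (l : list A) f g : (forall x, In x l -> f x = g x) -> rsum l f = rsum l g.
Proof. induction l as [|a l IH]; simpl; intros H; auto. rewrite H by auto. rewrite IH; auto. Qed.
Lemma rsum_ext {A} (l : list A) f g : (forall x, f x = g x) -> rsum l f = rsum l g.
Proof. intros; apply rsum_ext_in; auto. Qed.
Lemma rsum_app {A} (l1 l2 : list A) f : rsum (l1 ++ l2) f = rsum l1 f + rsum l2 f.
Proof. induction l1; simpl; [lra|rewrite IHl1; lra]. Qed.
Lemma rsum_scal {A} (l : list A) c f : rsum l (fun x => c * f x) = c * rsum l f.
Proof. induction l; simpl; [ring| rewrite IHl; ring]. Qed.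
Lemma rsum_plus {A} (l : list A) f g : rsum l (fun x => f x + g x) = rsum l f + rsum l g.
Proof. induction l; simpl; [ring| rewrite IHl; ring]. Qed.
Lemma rsum_minus {A} (l : list A) f g : rsum l (fun x => f x - g x) = rsum l f - rsum l g.
Proof. induction l; simpl; [ring| rewrite IHl; ring]. Qed.
Lemma rsum_zero {A} (l : list A) f : (forall x, In x l -> f x = 0) -> rsum l f = 0.
Proof. induction l as [|a l IH]; simpl; intros H; auto. rewrite H, IH; auto; lra. Qed.
Lemma rsum_abs_le {A} (l : list A) f g : (forall x, Rabs (f x) <= g x) -> Rabs (rsum l f) <= rsum l g.
Proof. induction l; simpl; intros H. rewrite Rabs_R0; lra.
  eapply Rle_trans; [apply Rabs_triang|]. specialize (IHl H). specialize (H a). lra. Qed.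
Lemma rsum_le {A} (l : list A) f g : (forall x, f x <= g x) -> rsum l f <= rsum l g.
Proof. induction l; simpl; intros H. lra. specialize (IHl H). specialize (H a). lra. Qed.
Lemma rsum_nonneg {A} (l : list A) f : (forall x, 0 <= f x) -> 0 <= rsum l f.
Proof. induction l; simpl; intros H. lra. specialize (IHl H). specialize (H a). lra. Qed.

Lemma Re_csum {A} (l : list A) f : Re (csum l f) = rsum l (fun x => Re (f x)).
Proof. induction l; simpl; auto. rewrite <- IHl. reflexivity. Qed.
Lemma Im_csum {A} (l : list A) f : Im (csum l f) = rsum l (fun x => Im (f x)).
Proof. induction l; simpl; auto. rewrite <- IHl. reflexivity. Qed.

Lemma zrange_S lo m : zrange lo (S m) = lo :: zrange (lo + 1) m.
Proof.
  unfold zrange. simpl. f_equal. lia.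
  rewrite <- seq_shift, map_map. apply map_ext. intros; lia.
Qed.
Lemma zrange_app lo a b : zrange lo (a + b) = zrange lo a ++ zrange (lo + Z.of_nat a) b.
Proof.
  revert lo; induction a; intros lo.
  - simpl. f_equal. lia.
  - rewrite Nat.add_succ_l, !zrange_S, IHa. rewrite <- app_comm_cons. f_equal. f_equal. f_equal. lia.
Qed.
Lemma zrange_in lo m k : In k (zrange lo m) -> (lo <= k < lo + Z.of_nat m)%Z.
Proof. unfold zrange. rewrite in_map_iff. intros [j [<- Hj]]. apply in_seq in Hj. lia. Qed.

Definition box_range (n : nat) : list Z := zrange (- Z.of_nat n) (2 * n + 1).
Definition in_box (n : nat) (k : Z) : R := if Z.leb (Z.abs k) (Z.of_nat n) then 1 else 0.

Lemma rsum_in_box (n m : nat) (g : Z -> R) : (n <= m)%nat ->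
  rsum (box_range m) (fun k => in_box n k * g k) = rsum (box_range n) g.
Proof.
  intros Hnm. unfold box_range.
  replace (2 * m + 1)%nat with ((m - n) + ((2 * n + 1) + (m - n)))%nat by lia.
  rewrite zrange_app, zrange_app, !rsum_app.
  rewrite (rsum_zero (zrange (- Z.of_nat m) (m - n))).
  rewrite (rsum_zero (zrange _ (m - n))).
  replace (- Z.of_nat m + Z.of_nat (m - n))%Z with (- Z.of_nat n)%Z by lia.
  rewrite (rsum_ext_in _ _ g). lra.
  - intros k Hk. apply zrange_in in Hk. unfold in_box. destruct (Z.leb_spec (Z.abs k) (Z.of_nat n)); [ring|lia].
  - intros k Hk. apply zrange_in in Hk. unfold in_box. destruct (Z.leb_spec (Z.abs k) (Z.of_nat n)); [lia|ring].
  - intros k Hk. apply zrange_in in Hk. unfold in_box. destruct (Z.leb_spec (Z.abs k) (Z.of_nat n)); [lia|ring].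
Qed.

Definition rsum3 (l : list Z) (F : Z -> Z -> Z -> R) : R :=
  rsum l (fun k1 => rsum l (fun k2 => rsum l (fun k3 => F k1 k2 k3))).
Definition rbox (F : Z -> Z -> Z -> R) (n : nat) : R := rsum3 (box_range n) F.

Lemma rbox_in_box n m F : (n <= m)%nat ->
  rbox F n = rsum3 (box_range m) (fun k1 k2 k3 => in_box n k1 * in_box n k2 * in_box n k3 * F k1 k2 k3).
Proof.
  intros H. unfold rbox, rsum3.
  transitivity (rsum (box_range m) (fun k1 => in_box n k1 * rsum (box_range m) (fun k2 => in_box n k2 *
     rsum (box_range m) (fun k3 => in_box n k3 * F k1 k2 k3)))).
  - rewrite rsum_in_box by auto. apply rsum_ext; intros k1. rewrite rsum_in_box by auto.
    apply rsum_ext; intros k2. rewrite rsum_in_box by auto. reflexivity.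
  - apply rsum_ext; intros k1. rewrite <- rsum_scal. apply rsum_ext; intros k2.
    rewrite <- rsum_scal, <- rsum_scal. apply rsum_ext; intros k3. ring.
Qed.

Lemma in_box_01 n k : in_box n k = 0 \/ in_box n k = 1.
Proof. unfold in_box. destruct (Z.leb _ _); auto. Qed.

Lemma rsum3_minus l F G : rsum3 l F - rsum3 l G = rsum3 l (fun k1 k2 k3 => F k1 k2 k3 - G k1 k2 k3).
Proof. unfold rsum3. rewrite <- rsum_minus. apply rsum_ext; intros. rewrite <- rsum_minus.
  apply rsum_ext; intros. rewrite <- rsum_minus. reflexivity. Qed.
Lemma rsum3_abs l G H : (forall k1 k2 k3, Rabs (G k1 k2 k3) <= H k1 k2 k3) -> Rabs (rsum3 l G) <= rsum3 l H.
Proof. intros HG. unfold rsum3. apply rsum_abs_le; intros. eapply Rle_trans; [apply rsum_abs_le; intros; apply Rle_refl|].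
  apply rsum_le; intros. eapply Rle_trans; [apply rsum_abs_le; intros; apply Rle_refl|].
  apply rsum_le; intros. apply HG. Qed.

Lemma rbox_sub_le n m F M : (n <= m)%nat -> (forall k1 k2 k3, Rabs (F k1 k2 k3) <= M k1 k2 k3) ->
  Rabs (rbox F m - rbox F n) <= rbox M m - rbox M n.
Proof.
  intros Hnm HF. rewrite (rbox_in_box n m F Hnm), (rbox_in_box n m M Hnm).
  unfold rbox. rewrite !rsum3_minus. apply rsum3_abs. intros k1 k2 k3.
  specialize (HF k1 k2 k3).
  replace (F k1 k2 k3 - in_box n k1 * in_box n k2 * in_box n k3 * F k1 k2 k3) with
    ((1 - in_box n k1 * in_box n k2 * in_box n k3) * F k1 k2 k3) by ring.
  replace (M k1 k2 k3 - in_box n k1 * in_box n k2 * in_box n k3 * M k1 k2 k3) with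
    ((1 - in_box n k1 * in_box n k2 * in_box n k3) * M k1 k2 k3) by ring.
  rewrite Rabs_mult.
  destruct (in_box_01 n k1) as [-> | ->]; destruct (in_box_01 n k2) as [-> | ->];
  destruct (in_box_01 n k3) as [-> | ->];
  match goal with |- Rabs ?c * _ <= _ => replace (Rabs c) with c by (rewrite Rabs_pos_eq; lra) end; lra.
Qed.

(** * Summable majorants and termwise differentiation *)

Definition summable (M : Z -> Z -> Z -> R) : Prop :=
  (forall k1 k2 k3, 0 <= M k1 k2 k3) /\ exists B, forall n, rbox M n <= B.

Lemma rbox_mono M : (forall k1 k2 k3, 0 <= M k1 k2 k3) -> forall n m, (n <= m)%nat -> rbox M n <= rbox M m.
Proof. intros HM n m H. pose proof (rbox_sub_le n m M M H) as Hd.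
  assert (Hx : forall k1 k2 k3, Rabs (M k1 k2 k3) <= M k1 k2 k3) by (intros; rewrite Rabs_pos_eq; auto; lra).
  specialize (Hd Hx). pose proof (Rabs_pos (rbox M m - rbox M n)). lra. Qed.

Lemma summable_lim M : summable M -> exists L, is_lim_seq (rbox M) (Finite L) /\ forall n, rbox M n <= L.
Proof.
  intros [H0 [B HB]].
  destruct (ex_finite_lim_seq_incr (rbox M) B) as [L HL].
  - intros n; apply rbox_mono; auto.
  - auto.
  - exists L; split; auto. intros n. apply is_lim_seq_incr_compare; auto.
    intros; apply rbox_mono; auto.
Qed.

Lemma rbox_tail_bound M F L : (forall k1 k2 k3, 0 <= M k1 k2 k3) -> is_lim_seq (rbox M) (Finite L) ->
  (forall n, rbox M n <= L) ->
  (forall k1 k2 k3, Rabs (F k1 k2 k3) <= M k1 k2 k3) ->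
  exists l, is_lim_seq (rbox F) (Finite l) /\ forall n, Rabs (rbox F n - l) <= L - rbox M n.
Proof.
  intros H0 HL HLb HF.
  assert (Hc : ex_finite_lim_seq (rbox F)).
  { apply ex_lim_seq_cauchy_corr. intros eps.
    apply is_lim_seq_spec in HL. destruct (HL eps) as [N HN]. exists N. intros n m Hn Hm.
    destruct (Nat.le_ge_cases n m) as [Hnm|Hnm].
    - rewrite Rabs_minus_sym. eapply Rle_lt_trans; [apply rbox_sub_le; eauto|].
      specialize (HN n Hn). specialize (HLb m). apply Rabs_lt_between in HN. lra.
    - eapply Rle_lt_trans; [apply rbox_sub_le; eauto|].
      specialize (HN m Hm). specialize (HLb n). apply Rabs_lt_between in HN. lra. }
  destruct Hc as [l Hl]. exists l; split; auto. intros n.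
  assert (Hlim : is_lim_seq (fun m => Rabs (rbox F m - rbox F n)) (Rabs (l - rbox F n))).
  { apply (is_lim_seq_abs _ (Finite (l - rbox F n))). apply is_lim_seq_minus'; auto. apply is_lim_seq_const. }
  rewrite Rabs_minus_sym.
  assert (Hle := is_lim_seq_le_loc (fun m => Rabs (rbox F m - rbox F n)) (fun _ => L - rbox M n) _ _
    (ltac:(exists n; intros m Hm; eapply Rle_trans; [apply rbox_sub_le; eauto|]; specialize (HLb m); lra))
    Hlim (is_lim_seq_const _)).
  simpl in Hle. exact Hle.
Qed.

Lemma summable_conv M F : summable M -> (forall k1 k2 k3, Rabs (F k1 k2 k3) <= M k1 k2 k3) ->
  ex_finite_lim_seq (rbox F).
Proof. intros HM HF. destruct (summable_lim M HM) as [L [HL HLb]].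
  destruct (rbox_tail_bound M F L (proj1 HM) HL HLb HF) as [l [Hl _]]. exists l; auto. Qed.

Lemma summable_CVU M (G : Z -> Z -> Z -> R -> R) (D : R -> Prop) : summable M ->
  (forall k1 k2 k3 s, D s -> Rabs (G k1 k2 k3 s) <= M k1 k2 k3) ->
  CVU_dom (fun n s => rbox (fun k1 k2 k3 => G k1 k2 k3 s) n) D.
Proof.
  intros HM HG. destruct (summable_lim M HM) as [L [HL HLb]].
  intros eps. pose proof HL as HL'. apply is_lim_seq_spec in HL. destruct (HL eps) as [N HN]. exists N. intros n Hn x Dx.
  destruct (rbox_tail_bound M (fun k1 k2 k3 => G k1 k2 k3 x) L (proj1 HM) HL' HLb)
    as [l [Hl Hb]]. intros; apply HG; auto.
  replace (Lim_seq (fun n0 => rbox (fun k1 k2 k3 => G k1 k2 k3 x) n0)) with (Finite l) by (symmetry; apply (is_lim_seq_unique _ _ Hl)). simpl.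
  eapply Rle_lt_trans; [apply Hb|]. specialize (HN n Hn). apply Rabs_lt_between in HN. lra.
Qed.

Lemma is_derive_rsum {A} (l : list A) (f : A -> R -> R) f' s0 :
  (forall x, is_derive (f x) s0 (f' x)) ->
  is_derive (fun s => rsum l (fun x => f x s)) s0 (rsum l f').
Proof.
  intros H. induction l; simpl.
  - exact (is_derive_const (K:=R_AbsRing) (V:=R_NormedModule) 0 s0).
  - apply (is_derive_plus (f a) (fun s => rsum l (fun x => f x s))); auto.
Qed.

Lemma continuity_rsum {A} (l : list A) (f : A -> R -> R) s0 :
  (forall x, continuity_pt (f x) s0) -> continuity_pt (fun s => rsum l (fun x => f x s)) s0.
Proof.
  intros H. induction l; simpl.
  - apply continuity_pt_const. intros ? ?; reflexivity.
  - apply (continuity_pt_plus (f a) (fun s => rsum l (fun x => f x s))); auto.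
Qed.

Lemma is_derive_rbox (F F' : Z -> Z -> Z -> R -> R) n s0 :
  (forall k1 k2 k3, is_derive (F k1 k2 k3) s0 (F' k1 k2 k3 s0)) ->
  is_derive (fun s => rbox (fun k1 k2 k3 => F k1 k2 k3 s) n) s0 (rbox (fun k1 k2 k3 => F' k1 k2 k3 s0) n).
Proof.
  intros H. unfold rbox, rsum3.
  apply (is_derive_rsum _ (fun k1 s => rsum (box_range n) (fun k2 => rsum (box_range n) (fun k3 => F k1 k2 k3 s)))).
  intros k1. apply (is_derive_rsum _ (fun k2 s => rsum (box_range n) (fun k3 => F k1 k2 k3 s))).
  intros k2. apply (is_derive_rsum _ (fun k3 s => F k1 k2 k3 s)). intros k3. apply H.
Qed.

Lemma continuity_rbox (F : Z -> Z -> Z -> R -> R) n s0 :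
  (forall k1 k2 k3, continuity_pt (F k1 k2 k3) s0) ->
  continuity_pt (fun s => rbox (fun k1 k2 k3 => F k1 k2 k3 s) n) s0.
Proof.
  intros H. unfold rbox, rsum3.
  apply (continuity_rsum _ (fun k1 s => rsum (box_range n) (fun k2 => rsum (box_range n) (fun k3 => F k1 k2 k3 s)))).
  intros k1. apply (continuity_rsum _ (fun k2 s => rsum (box_range n) (fun k3 => F k1 k2 k3 s))).
  intros k2. apply (continuity_rsum _ (fun k3 s => F k1 k2 k3 s)). intros k3. apply H.
Qed.

Lemma CVU_dom_ext (f g : nat -> R -> R) D : (forall n x, D x -> f n x = g n x) -> CVU_dom f D -> CVU_dom g D.
Proof.
  intros He H eps. destruct (H eps) as [N HN]. exists N. intros n Hn x Dx.
  rewrite <- He by auto. rewrite <- (Lim_seq_ext (fun n0 => f n0 x)). apply HN; auto.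
  intros; apply He; auto.
Qed.

Lemma is_derive_rbox_lim (F F' : Z -> Z -> Z -> R -> R) (M : Z -> Z -> Z -> R) (s0 dl : R) :
  0 < dl ->
  (forall k1 k2 k3 s, s0 - dl < s < s0 + dl -> is_derive (F k1 k2 k3) s (F' k1 k2 k3 s)) ->
  (forall k1 k2 k3 s, s0 - dl < s < s0 + dl -> continuity_pt (F' k1 k2 k3) s) ->
  (forall k1 k2 k3 s, s0 - dl < s < s0 + dl -> Rabs (F k1 k2 k3 s) <= M k1 k2 k3) ->
  (forall k1 k2 k3 s, s0 - dl < s < s0 + dl -> Rabs (F' k1 k2 k3 s) <= M k1 k2 k3) ->
  summable M ->
  is_derive (fun s => real (Lim_seq (fun n => rbox (fun k1 k2 k3 => F k1 k2 k3 s) n))) s0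
    (real (Lim_seq (fun n => rbox (fun k1 k2 k3 => F' k1 k2 k3 s0) n))).
Proof.
  intros Hdl Hd Hc HF HF' HM.
  set (D := fun s => s0 - dl < s /\ s < s0 + dl).
  assert (HDo : open D). { apply open_and; [apply open_gt|apply open_lt]. }
  assert (Hloc : forall x, D x -> locally x D). { intros x Dx. apply HDo; auto. }
  assert (Hder : forall n x, D x -> is_derive (fun s => rbox (fun k1 k2 k3 => F k1 k2 k3 s) n) x
                   (rbox (fun k1 k2 k3 => F' k1 k2 k3 x) n)).
  { intros n x Dx. apply (is_derive_rbox F F'). intros; apply Hd; auto. }
  assert (HDer : forall n x, D x -> Derive (fun s => rbox (fun k1 k2 k3 => F k1 k2 k3 s) n) x =
                   rbox (fun k1 k2 k3 => F' k1 k2 k3 x) n).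
  { intros; apply is_derive_unique; auto. }
  pose proof (CVU_Derive (fun n s => rbox (fun k1 k2 k3 => F k1 k2 k3 s) n) D HDo) as HC.
  assert (Hs0 : D s0) by (unfold D; lra).
  specialize (HC ltac:(intros a b x Da Db Hx; unfold D in *; lra)
    (summable_CVU M F D HM ltac:(intros; apply HF; auto))
    ltac:(intros n x Dx; eexists; apply Hder; auto)).
  specialize (HC ltac:(intros n x Dx;
     apply (continuity_pt_ext_loc (fun s => rbox (fun k1 k2 k3 => F' k1 k2 k3 s) n));
     [ apply (filter_imp D); [intros y Dy; symmetry; apply HDer; auto | apply Hloc; auto]
     | apply continuity_rbox; intros; apply Hc; auto ])).
  specialize (HC ltac:(apply (CVU_dom_ext (fun n s => rbox (fun k1 k2 k3 => F' k1 k2 k3 s) n));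
     [intros n x Dx; symmetry; apply HDer; auto | apply summable_CVU with M; auto; intros; apply HF'; auto])).
  specialize (HC s0 Hs0).
  rewrite (Lim_seq_ext _ (fun n => Derive (fun s => rbox (fun k1 k2 k3 => F k1 k2 k3 s) n) s0)).
  exact HC. intros n; symmetry; apply HDer; auto.
Qed.

Definition reF (f : Z -> Z -> Z -> C) := fun k1 k2 k3 => Re (f k1 k2 k3).
Definition imF (f : Z -> Z -> Z -> C) := fun k1 k2 k3 => Im (f k1 k2 k3).

Lemma Re_box_sum f n : Re (box_sum f n) = rbox (reF f) n.
Proof. unfold box_sum, rbox, rsum3, box_range, reF. rewrite Re_csum. apply rsum_ext; intros.
  rewrite Re_csum. apply rsum_ext; intros. rewrite Re_csum. reflexivity. Qed.
Lemma Im_box_sum f n : Im (box_sum f n) = rbox (imF f) n.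
Proof. unfold box_sum, rbox, rsum3, box_range, imF. rewrite Im_csum. apply rsum_ext; intros.
  rewrite Im_csum. apply rsum_ext; intros. rewrite Im_csum. reflexivity. Qed.

Lemma lattice_sum_rbox f : lattice_sum f = (real (Lim_seq (rbox (reF f))), real (Lim_seq (rbox (imF f)))).
Proof. unfold lattice_sum. f_equal; f_equal; apply Lim_seq_ext; intros; [apply Re_box_sum|apply Im_box_sum]. Qed.

Definition lattice_summable (f : Z -> Z -> Z -> C) : Prop :=
  ex_finite_lim_seq (rbox (reF f)) /\ ex_finite_lim_seq (rbox (imF f)).

Lemma lattice_sum_ext f g : (forall k1 k2 k3, f k1 k2 k3 = g k1 k2 k3) -> lattice_sum f = lattice_sum g.
Proof. intros H. rewrite !lattice_sum_rbox. f_equal; f_equal; apply Lim_seq_ext; intros n;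
  unfold rbox, rsum3, reF, imF; apply rsum_ext; intros; apply rsum_ext; intros; apply rsum_ext; intros; rewrite H; auto. Qed.

Lemma rbox_lin a b F G n : rbox (fun k1 k2 k3 => a * F k1 k2 k3 + b * G k1 k2 k3) n = a * rbox F n + b * rbox G n.
Proof. unfold rbox, rsum3. rewrite <- !rsum_scal, <- rsum_plus. apply rsum_ext; intros.
  rewrite <- !rsum_scal, <- rsum_plus. apply rsum_ext; intros.
  rewrite <- !rsum_scal, <- rsum_plus. apply rsum_ext; intros. reflexivity. Qed.

Lemma rbox_ext F G n : (forall k1 k2 k3, F k1 k2 k3 = G k1 k2 k3) -> rbox F n = rbox G n.
Proof. intros H; unfold rbox, rsum3; apply rsum_ext; intros; apply rsum_ext; intros; apply rsum_ext; intros; auto. Qed.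
Lemma rbox_lin4 a b c d F G H J n : rbox (fun k1 k2 k3 => a * F k1 k2 k3 + b * G k1 k2 k3 + (c * H k1 k2 k3 + d * J k1 k2 k3)) n
   = a * rbox F n + b * rbox G n + (c * rbox H n + d * rbox J n).
Proof. transitivity (rbox (fun k1 k2 k3 => 1 * (a * F k1 k2 k3 + b * G k1 k2 k3) + 1 * (c * H k1 k2 k3 + d * J k1 k2 k3)) n).
  apply rbox_ext; intros; ring. rewrite rbox_lin, !rbox_lin. ring. Qed.

Lemma is_lim_seq_lin a b u v : ex_finite_lim_seq u -> ex_finite_lim_seq v ->
  is_lim_seq (fun n => a * u n + b * v n) (a * real (Lim_seq u) + b * real (Lim_seq v)).
Proof. intros [lu Hu] [lv Hv]. rewrite (is_lim_seq_unique _ _ Hu), (is_lim_seq_unique _ _ Hv). simpl.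
  apply is_lim_seq_plus'; [apply (is_lim_seq_scal_l u a lu)|apply (is_lim_seq_scal_l v b lv)]; auto. Qed.

Lemma lattice_sum_lin (a b : C) f g : lattice_summable f -> lattice_summable g ->
  lattice_sum (fun k1 k2 k3 => a * f k1 k2 k3 + b * g k1 k2 k3)%C =
  (a * lattice_sum f + b * lattice_sum g)%C /\
  lattice_summable (fun k1 k2 k3 => a * f k1 k2 k3 + b * g k1 k2 k3)%C.
Proof.
  intros [Hf1 Hf2] [Hg1 Hg2]. rewrite !lattice_sum_rbox.
  destruct a as [a1 a2], b as [b1 b2].
  assert (E1 : forall n, rbox (reF (fun k1 k2 k3 => (a1,a2) * f k1 k2 k3 + (b1,b2) * g k1 k2 k3)%C) n =
     (a1 * rbox (reF f) n + (-a2) * rbox (imF f) n) + (b1 * rbox (reF g) n + (-b2) * rbox (imF g) n)).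
  { intros n. rewrite <- rbox_lin4. apply rbox_ext; intros. unfold reF, imF. destruct (f k1 k2 k3), (g k1 k2 k3). simpl. ring. }
  assert (E2 : forall n, rbox (imF (fun k1 k2 k3 => (a1,a2) * f k1 k2 k3 + (b1,b2) * g k1 k2 k3)%C) n =
     (a2 * rbox (reF f) n + a1 * rbox (imF f) n) + (b2 * rbox (reF g) n + b1 * rbox (imF g) n)).
  { intros n. rewrite <- rbox_lin4. apply rbox_ext; intros. unfold reF, imF. destruct (f k1 k2 k3), (g k1 k2 k3). simpl. ring. }
  pose proof (is_lim_seq_lin a1 (-a2) _ _ Hf1 Hf2) as L1. pose proof (is_lim_seq_lin b1 (-b2) _ _ Hg1 Hg2) as L2.
  pose proof (is_lim_seq_lin a2 a1 _ _ Hf1 Hf2) as L3. pose proof (is_lim_seq_lin b2 b1 _ _ Hg1 Hg2) as L4.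
  pose proof (is_lim_seq_plus' _ _ _ _ L1 L2) as LR. pose proof (is_lim_seq_plus' _ _ _ _ L3 L4) as LI.
  rewrite (Lim_seq_ext _ _ E1), (Lim_seq_ext _ _ E2).
  rewrite (is_lim_seq_unique _ _ LR), (is_lim_seq_unique _ _ LI). split.
  - simpl. unfold Cplus, Cmult; simpl. f_equal; ring.
  - split; eexists; [eapply is_lim_seq_ext; [|apply LR]|eapply is_lim_seq_ext; [|apply LI]]; intros; symmetry; [apply E1|apply E2].
Qed.

Lemma real_Rbar_mult (r : R) (x : Rbar) : real (Rbar_mult r x) = r * real x.
Proof. destruct x as [x| |]; simpl; [reflexivity| |];
  unfold Rbar_mult, Rbar_mult'; destruct (Rle_dec 0 r) as [H|H]; try destruct (Rle_lt_or_eq_dec 0 r H);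
  simpl; ring. Qed.

Lemma rbox_scal c F n : rbox (fun k1 k2 k3 => c * F k1 k2 k3) n = c * rbox F n.
Proof. unfold rbox, rsum3. rewrite <- rsum_scal. apply rsum_ext; intros. rewrite <- rsum_scal.
  apply rsum_ext; intros. rewrite <- rsum_scal. reflexivity. Qed.

Lemma lattice_sum_scal_R (r : R) f : (RtoC r * lattice_sum f)%C = lattice_sum (fun k1 k2 k3 => RtoC r * f k1 k2 k3)%C.
Proof.
  rewrite !lattice_sum_rbox.
  rewrite (Lim_seq_ext (rbox (reF (fun k1 k2 k3 => RtoC r * f k1 k2 k3)%C)) (fun n => r * rbox (reF f) n)).
  rewrite (Lim_seq_ext (rbox (imF (fun k1 k2 k3 => RtoC r * f k1 k2 k3)%C)) (fun n => r * rbox (imF f) n)).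
  rewrite !Lim_seq_scal_l, !real_Rbar_mult. unfold Cmult, RtoC; simpl. f_equal; ring.
  - intros n. rewrite <- rbox_scal. apply rbox_ext; intros. unfold imF, reF. destruct (f k1 k2 k3); simpl. ring.
  - intros n. rewrite <- rbox_scal. apply rbox_ext; intros. unfold imF, reF. destruct (f k1 k2 k3); simpl. ring.
Qed.

Lemma lattice_sum_conj f : Cconj (lattice_sum f) = lattice_sum (fun k1 k2 k3 => Cconj (f k1 k2 k3)).
Proof.
  rewrite !lattice_sum_rbox.
  rewrite (Lim_seq_ext (rbox (imF (fun k1 k2 k3 => Cconj (f k1 k2 k3)))) (fun n => - rbox (imF f) n)).
  rewrite Lim_seq_opp. unfold Cconj; simpl. f_equal.
  - destruct (Lim_seq (rbox (imF f))); simpl; ring.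
  - intros n. rewrite <- (Rmult_1_l (rbox (imF f) n)). rewrite Ropp_mult_distr_l.
    rewrite <- rbox_scal. apply rbox_ext; intros. unfold imF, reF. destruct (f k1 k2 k3); simpl. ring.
Qed.

Lemma lattice_summable_bound M f : summable M -> (forall k1 k2 k3, Rabs (Re (f k1 k2 k3)) <= M k1 k2 k3) ->
  (forall k1 k2 k3, Rabs (Im (f k1 k2 k3)) <= M k1 k2 k3) -> lattice_summable f.
Proof. intros HM H1 H2; split; eapply summable_conv; eauto. Qed.

Definition cderiv (f : R -> C) (s : R) (l : C) : Prop :=
  is_derive (fun t => Re (f t)) s (Re l) /\ is_derive (fun t => Im (f t)) s (Im l).

Lemma dR_cderiv f s l : cderiv f s l -> dR f s = l.
Proof. intros [H1 H2]. unfold dR. apply is_derive_unique in H1. apply is_derive_unique in H2.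
  simpl in *. rewrite H1, H2. destruct l; reflexivity. Qed.

Lemma dR_ext_loc f g s : locally s (fun t => f t = g t) -> dR f s = dR g s.
Proof. intros H. unfold dR. f_equal; apply Derive_ext_loc; eapply filter_imp; try exact H;
  intros t Ht; simpl; rewrite Ht; reflexivity. Qed.

Lemma cderiv_csum {A} (l : list A) (f : A -> R -> C) f' s :
  (forall x, cderiv (f x) s (f' x)) -> cderiv (fun t => csum l (fun x => f x t)) s (csum l f').
Proof.
  intros H. split.
  - rewrite Re_csum. apply (is_derive_ext (fun t => rsum l (fun x => Re (f x t)))).
    intros t; rewrite Re_csum; reflexivity. apply (is_derive_rsum l (fun x t => Re (f x t))). intros; apply H.
  - rewrite Im_csum. apply (is_derive_ext (fun t => rsum l (fun x => Im (f x t)))).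
    intros t; rewrite Im_csum; reflexivity. apply (is_derive_rsum l (fun x t => Im (f x t))). intros; apply H.
Qed.

Lemma cderiv_cmul (c : C) f s l : cderiv f s l -> cderiv (fun t => c * f t)%C s (c * l)%C.
Proof.
  intros [H1 H2]. destruct c as [c1 c2]. split; simpl.
  - apply (is_derive_minus (fun t => c1 * Re (f t)) (fun t => c2 * Im (f t)));
    apply is_derive_scal; auto.
  - apply (is_derive_plus (fun t => c1 * Im (f t)) (fun t => c2 * Re (f t)));
    apply is_derive_scal; auto.
Qed.

Lemma cderiv_const (c : C) s : cderiv (fun _ => c) s 0%C.
Proof. split; simpl; exact (is_derive_const (K:=R_AbsRing) (V:=R_NormedModule) _ s). Qed.

Lemma cderiv_lattice_sum (f f' : Z -> Z -> Z -> R -> C) (M : Z -> Z -> Z -> R) (s0 dl : R) :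
  0 < dl ->
  (forall k1 k2 k3 s, s0 - dl < s < s0 + dl -> cderiv (f k1 k2 k3) s (f' k1 k2 k3 s)) ->
  (forall k1 k2 k3 s, s0 - dl < s < s0 + dl -> continuity_pt (fun t => Re (f' k1 k2 k3 t)) s) ->
  (forall k1 k2 k3 s, s0 - dl < s < s0 + dl -> continuity_pt (fun t => Im (f' k1 k2 k3 t)) s) ->
  (forall k1 k2 k3 s, s0 - dl < s < s0 + dl -> Rabs (Re (f k1 k2 k3 s)) <= M k1 k2 k3) ->
  (forall k1 k2 k3 s, s0 - dl < s < s0 + dl -> Rabs (Im (f k1 k2 k3 s)) <= M k1 k2 k3) ->
  (forall k1 k2 k3 s, s0 - dl < s < s0 + dl -> Rabs (Re (f' k1 k2 k3 s)) <= M k1 k2 k3) ->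
  (forall k1 k2 k3 s, s0 - dl < s < s0 + dl -> Rabs (Im (f' k1 k2 k3 s)) <= M k1 k2 k3) ->
  summable M ->
  cderiv (fun s => lattice_sum (fun k1 k2 k3 => f k1 k2 k3 s)) s0 (lattice_sum (fun k1 k2 k3 => f' k1 k2 k3 s0))
  /\ lattice_summable (fun k1 k2 k3 => f' k1 k2 k3 s0).
Proof.
  intros Hdl Hd Hc1 Hc2 Hb1 Hb2 Hb3 Hb4 HM.
  assert (Hs0 : s0 - dl < s0 < s0 + dl) by lra.
  split; [|apply lattice_summable_bound with M; auto].
  split.
  - apply (is_derive_ext (fun s => real (Lim_seq (fun n => rbox (fun k1 k2 k3 => Re (f k1 k2 k3 s)) n)))).
    intros t. rewrite lattice_sum_rbox. reflexivity.
    rewrite lattice_sum_rbox. simpl.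
    apply (is_derive_rbox_lim (fun k1 k2 k3 s => Re (f k1 k2 k3 s)) (fun k1 k2 k3 s => Re (f' k1 k2 k3 s)) M s0 dl); auto.
    intros; apply Hd; auto.
  - apply (is_derive_ext (fun s => real (Lim_seq (fun n => rbox (fun k1 k2 k3 => Im (f k1 k2 k3 s)) n)))).
    intros t. rewrite lattice_sum_rbox. reflexivity.
    rewrite lattice_sum_rbox. simpl.
    apply (is_derive_rbox_lim (fun k1 k2 k3 s => Im (f k1 k2 k3 s)) (fun k1 k2 k3 s => Im (f' k1 k2 k3 s)) M s0 dl); auto.
    intros; apply Hd; auto.
Qed.

(** * Gaussian majorants *)

Lemma exp_le x y : x <= y -> exp x <= exp y.
Proof. intros [H|H]; [left; apply exp_increasing; auto| subst; lra]. Qed.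

Section OneD.
Variable c : R.
Hypothesis Hc : 0 < c.
Let r := exp (- c).
Lemma r_pos : 0 < r. Proof. apply exp_pos. Qed.
Lemma r_lt1 : r < 1.
Proof. unfold r. rewrite <- exp_0. apply exp_increasing. lra. Qed.
Definition gauss_primitive (k : Z) : R :=
  if Z.leb k 0 then r / (1 - r) * exp (c * IZR k) else (1 + r) / (1 - r) - exp (- c * IZR k) / (1 - r).

Lemma gauss_primitive_step k : exp (- c * IZR k * IZR k) <= gauss_primitive (k + 1) - gauss_primitive k.
Proof.
  pose proof r_pos as Hr. pose proof r_lt1 as Hr1.
  assert (Hrc : exp c * r = 1). { unfold r. rewrite <- exp_plus. replace (c + - c) with 0 by ring. apply exp_0. }
  unfold gauss_primitive. destruct (Z.leb_spec (k+1) 0) as [H1|H1]; destruct (Z.leb_spec k 0) as [H2|H2]; try lia.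
  - rewrite plus_IZR. replace (c * (IZR k + 1)) with (c * IZR k + c) by ring. rewrite exp_plus.
    replace (r / (1 - r) * (exp (c * IZR k) * exp c) - r / (1 - r) * exp (c * IZR k)) with
      (exp (c * IZR k) * ((exp c * r - r) / (1 - r))) by (field; lra).
    rewrite Hrc. unfold Rdiv. rewrite Rinv_r by lra. rewrite Rmult_1_r.
    apply exp_le. assert (IZR k + 1 <= 0) by (rewrite <- plus_IZR; apply (IZR_le _ 0); lia).
    assert (0 <= IZR k * (IZR k + 1)) by nra. assert (0 <= c * (IZR k * (IZR k + 1))) by (apply Rmult_le_pos; lra). nra.
  - assert (k = 0)%Z by lia. subst. simpl. rewrite Rmult_0_r, Rmult_0_r, exp_0.
    replace (- c * 1) with (-c) by ring. fold r.
    replace ((1 + r) / (1 - r) - r / (1 - r) - r / (1 - r) * 1) with 1 by (field; lra). lra.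
  - rewrite plus_IZR. replace (- c * (IZR k + 1)) with (- c * IZR k + - c) by ring. rewrite exp_plus. fold r.
    replace ((1 + r) / (1 - r) - exp (- c * IZR k) * r / (1 - r) - ((1 + r) / (1 - r) - exp (- c * IZR k) / (1 - r)))
      with (exp (- c * IZR k)) by (field; lra).
    apply exp_le. assert (1 <= IZR k) by (apply (IZR_le 1); lia).
    assert (0 <= IZR k * (IZR k - 1)) by nra. assert (0 <= c * (IZR k * (IZR k - 1))) by (apply Rmult_le_pos; lra). nra.
Qed.

Lemma gauss_primitive_bounds k : 0 <= gauss_primitive k <= (1 + r) / (1 - r).
Proof.
  pose proof r_pos as Hr. pose proof r_lt1 as Hr1.
  unfold gauss_primitive. destruct (Z.leb_spec k 0).
  - assert (exp (c * IZR k) <= 1). { rewrite <- exp_0. apply exp_le. assert (IZR k <= 0) by (apply (IZR_le _ 0); lia). nra. }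
    pose proof (exp_pos (c * IZR k)). split.
    + apply Rmult_le_pos; [apply Rdiv_le_0_compat|]; lra.
    + assert (0 < / (1 - r)) by (apply Rinv_0_lt_compat; lra). unfold Rdiv.
      assert (r * exp (c * IZR k) <= 1 + r) by nra. nra.
  - assert (exp (- c * IZR k) <= 1). { rewrite <- exp_0. apply exp_le. assert (1 <= IZR k) by (apply (IZR_le 1); lia). nra. }
    pose proof (exp_pos (- c * IZR k)). split.
    + replace ((1 + r) / (1 - r) - exp (- c * IZR k) / (1 - r)) with ((1 + r - exp (- c * IZR k)) / (1 - r)) by (field; lra).
      apply Rdiv_le_0_compat; lra.
    + assert (0 <= exp (- c * IZR k) / (1 - r)) by (apply Rdiv_le_0_compat; lra). lra.
Qed.

Lemma gauss_rsum_le lo len : rsum (zrange lo len) (fun k => exp (- c * IZR k * IZR k)) <= gauss_primitive (lo + Z.of_nat len) - gauss_primitive lo.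
Proof.
  revert lo. induction len; intros lo.
  - simpl. replace (lo + 0)%Z with lo by lia. lra.
  - rewrite zrange_S. simpl rsum. specialize (IHlen (lo + 1)%Z). pose proof (gauss_primitive_step lo).
    replace (lo + 1 + Z.of_nat len)%Z with (lo + Z.of_nat (S len))%Z in IHlen by lia. lra.
Qed.

Lemma gauss_rsum_bound lo len : rsum (zrange lo len) (fun k => exp (- c * IZR k * IZR k)) <= (1 + r) / (1 - r).
Proof. pose proof (gauss_rsum_le lo len). pose proof (gauss_primitive_bounds (lo + Z.of_nat len)). pose proof (gauss_primitive_bounds lo). lra. Qed.
End OneD.

Lemma summable_gauss (K c : R) : 0 <= K -> 0 < c ->
  summable (fun k1 k2 k3 => K * (exp (- c * IZR k1 * IZR k1) * exp (- c * IZR k2 * IZR k2) * exp (- c * IZR k3 * IZR k3))).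
Proof.
  intros HK Hc. split.
  - intros. apply Rmult_le_pos; auto. pose proof (exp_pos (- c * IZR k1 * IZR k1)).
    pose proof (exp_pos (- c * IZR k2 * IZR k2)). pose proof (exp_pos (- c * IZR k3 * IZR k3)).
    apply Rmult_le_pos; [apply Rmult_le_pos|]; lra.
  - set (Bd := (1 + exp (- c)) / (1 - exp (- c))). exists (K * (Bd * (Bd * Bd))). intros n.
    unfold rbox, rsum3.
    set (g := fun k => exp (- c * IZR k * IZR k)).
    assert (Hg : forall k, 0 <= g k) by (intros; left; apply exp_pos).
    assert (Hs : rsum (box_range n) g <= Bd) by (apply gauss_rsum_bound; auto).
    assert (Hs0 : 0 <= rsum (box_range n) g) by (apply rsum_nonneg; auto).
    set (S := rsum (box_range n) g) in *.
    transitivity (K * (S * (S * S))).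
    + right. transitivity (rsum (box_range n) (fun k1 => (K * S * S) * g k1)).
      * apply rsum_ext; intros k1. transitivity (rsum (box_range n) (fun k2 => (K * g k1 * S) * g k2)).
        -- apply rsum_ext; intros k2. transitivity (rsum (box_range n) (fun k3 => (K * g k1 * g k2) * g k3)).
           ++ apply rsum_ext; intros; unfold g; ring.
           ++ rewrite rsum_scal; fold S; ring.
        -- rewrite rsum_scal; fold S; ring.
      * rewrite rsum_scal; fold S; ring.
    + apply Rmult_le_compat_l; auto. apply Rmult_le_compat; auto; [apply Rmult_le_pos; auto|].
      apply Rmult_le_compat; auto.
Qed.

Lemma pow_exp_le x b m : 0 <= x -> 0 < b -> x ^ m <= (/ b) ^ m * exp (b * INR m * x).
Proof.
  intros Hx Hb. induction m.
  - simpl. rewrite Rmult_0_r, Rmult_0_l, exp_0. lra.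
  - rewrite S_INR. replace (b * (INR m + 1) * x) with (b * INR m * x + b * x) by ring.
    rewrite exp_plus. simpl.
    assert (x <= / b * exp (b * x)).
    { pose proof (exp_ineq1_le (b * x)). replace x with (/ b * (b * x)) at 1 by (field; lra).
      apply Rmult_le_compat_l; [left; apply Rinv_0_lt_compat; auto| lra]. }
    assert (0 <= x ^ m) by (apply pow_le; auto).
    replace (/ b * (/ b) ^ m * (exp (b * INR m * x) * exp (b * x))) with
      ((/ b * exp (b * x)) * ((/ b) ^ m * exp (b * INR m * x))) by ring.
    apply Rmult_le_compat; auto.
Qed.

Lemma sq_shift_lower (a D k : R) : 1 <= D * D -> k * k / 2 - a * a <= (a + D * k) * (a + D * k).
Proof. intros H. assert (0 <= (D * k + 2 * a) ^ 2) by apply pow2_ge_0.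
  assert (k * k <= D * D * (k * k)). { assert (0 <= k * k) by nra. nra. }
  assert (E : (a + D * k) * (a + D * k) = (D * k + 2 * a) ^ 2 / 2 + D * D * (k * k) / 2 - a * a) by field.
  rewrite E. lra. Qed.

Lemma poly_gauss_absorb (alpha t : R) (m : nat) : 0 < alpha -> 0 <= t ->
  (1 + t) ^ m * exp (- alpha * t) <=
  (/ (alpha / (2 * (INR m + 1)))) ^ m * exp (alpha / 2) * exp (- (alpha / 2) * t).
Proof.
  intros Ha Ht. set (bb := alpha / (2 * (INR m + 1))).
  assert (Hbb : 0 < bb) by (unfold bb; apply Rdiv_lt_0_compat; [auto| pose proof (pos_INR m); lra]).
  assert (Hrate : bb * INR m * (1 + t) <= alpha / 2 * (1 + t)).
  { apply Rmult_le_compat_r; [lra|]. unfold bb. pose proof (pos_INR m).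
    apply Rmult_le_reg_r with (2 * (INR m + 1)); [lra|].
    field_simplify; [|lra]. nra. }
  apply Rle_trans with ((/ bb) ^ m * exp (alpha / 2 * (1 + t)) * exp (- alpha * t)).
  - apply Rmult_le_compat_r; [left; apply exp_pos|].
    eapply Rle_trans; [apply (pow_exp_le (1 + t) bb m); lra|].
    apply Rmult_le_compat_l; [apply pow_le; left; apply Rinv_0_lt_compat; auto|]. apply exp_le; auto.
  - rewrite !Rmult_assoc, <- !exp_plus. right. do 2 f_equal. field.
Qed.

Lemma gauss_coset_le (a b cc D N k1 k2 k3 : Z) (eps alpha t : R) :
  D <> 0%Z -> (1 <= N)%Z -> 0 < eps -> 0 < alpha ->
  eps * (IZR (a + D * k1) ^ 2 + IZR (b + 2 * N * D * k2) ^ 2 + IZR (cc + D * k3) ^ 2) <= t ->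
  let g := alpha * eps / 2 in
  exp (- (alpha / 2) * t) <= exp (g * (IZR a ^ 2 + IZR b ^ 2 + IZR cc ^ 2)) *
    (exp (- (g / 2) * IZR k1 * IZR k1) * exp (- (g / 2) * IZR k2 * IZR k2) * exp (- (g / 2) * IZR k3 * IZR k3)).
Proof.
  intros HD HN He Ha Het g.
  assert (HDD : 1 <= IZR D * IZR D) by (rewrite <- mult_IZR; apply (IZR_le 1); nia).
  assert (HND : 1 <= (2 * IZR N * IZR D) * (2 * IZR N * IZR D)) by (rewrite <- !mult_IZR; apply (IZR_le 1); nia).
  assert (SA := sq_shift_lower (IZR a) (IZR D) (IZR k1) HDD).
  assert (SB := sq_shift_lower (IZR b) (2 * IZR N * IZR D) (IZR k2) HND).
  assert (SC := sq_shift_lower (IZR cc) (IZR D) (IZR k3) HDD).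
  rewrite !plus_IZR, !mult_IZR in Het. replace (IZR 2) with 2 in Het by reflexivity.
  rewrite <- !exp_plus. apply exp_le. unfold g.
  assert (alpha * eps * (IZR k1 * IZR k1 / 2 - IZR a * IZR a + (IZR k2 * IZR k2 / 2 - IZR b * IZR b) +
     (IZR k3 * IZR k3 / 2 - IZR cc * IZR cc)) <= alpha * t).
  { apply Rle_trans with (alpha * (eps * ((IZR a + IZR D * IZR k1) ^ 2 + (IZR b + 2 * IZR N * IZR D * IZR k2) ^ 2 +
      (IZR cc + IZR D * IZR k3) ^ 2))).
    - rewrite Rmult_assoc. apply Rmult_le_compat_l; [lra|]. apply Rmult_le_compat_l; [lra|]. simpl. nra.
    - apply Rmult_le_compat_l; lra. }
  nra.
Qed.

Lemma summable_poly_gauss_majorant (a b cc D N : Z) (eps alpha K : R) (m : nat) :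
  D <> 0%Z -> (1 <= N)%Z -> 0 < eps -> 0 < alpha -> 0 <= K ->
  exists M, summable M /\ forall k1 k2 k3 t, 0 <= t ->
    eps * (IZR (a + D * k1) ^ 2 + IZR (b + 2 * N * D * k2) ^ 2 + IZR (cc + D * k3) ^ 2) <= t ->
    K * (1 + t) ^ m * exp (- alpha * t) <= M k1 k2 k3.
Proof.
  intros HD HN He Ha HK.
  set (Cm := (/ (alpha / (2 * (INR m + 1)))) ^ m * exp (alpha / 2)).
  assert (HCm : 0 <= Cm).
  { unfold Cm. apply Rmult_le_pos; [apply pow_le | left; apply exp_pos].
    left; apply Rinv_0_lt_compat, Rdiv_lt_0_compat; [auto | pose proof (pos_INR m); lra]. }
  set (g := alpha * eps / 2).
  set (E := exp (g * (IZR a ^ 2 + IZR b ^ 2 + IZR cc ^ 2))).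
  assert (HE : 0 <= E) by (left; apply exp_pos).
  exists (fun k1 k2 k3 => K * Cm * E * (exp (- (g/2) * IZR k1 * IZR k1) * exp (- (g/2) * IZR k2 * IZR k2) * exp (- (g/2) * IZR k3 * IZR k3))).
  split. { apply summable_gauss; [apply Rmult_le_pos; [apply Rmult_le_pos|]; auto | unfold g; nra]. }
  intros k1 k2 k3 t Ht Het.
  rewrite Rmult_assoc, !(Rmult_assoc K). apply Rmult_le_compat_l; [auto|].
  eapply Rle_trans; [apply poly_gauss_absorb; auto|]. fold Cm. rewrite Rmult_assoc.
  apply Rmult_le_compat_l; [auto|]. exact (gauss_coset_le a b cc D N k1 k2 k3 eps alpha t HD HN He Ha Het).
Qed.

(** * The terms in real coordinates *)

(* For lambda in L' with coordinates (A, B, C) and z = x + i y: pnum = - sqrt N y p_z(lambda),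
   qre + i qim = C N z^2 - B z + A, qform = Q(lambda), and
   decay = p_z(lambda)^2 / 2 - Q(lambda) = R(lambda, z) + Q(lambda).  phi_term and phiSh_term
   are sqrt v * phi(lambda) and the conjugate of sqrt v * phi_Sh(lambda) at tau = u + i v
   (phi_term_eq, phiSh_term_eq); the suffixes _du, ..., _dy denote their partial derivatives. *)
Definition pnum (n A B Cc : R) x y := Cc * n * (x ^ 2 + y ^ 2) - B * x + A.
Definition qre (n A B Cc : R) x y := Cc * n * (x ^ 2 - y ^ 2) - B * x + A.
Definition qim (n A B Cc : R) x y := y * (2 * Cc * n * x - B).
Definition snorm (n A B Cc : R) x y := pnum n A B Cc x y ^ 2 + qre n A B Cc x y ^ 2 + qim n A B Cc x y ^ 2.
Definition decay (n A B Cc : R) x y := snorm n A B Cc x y / (4 * n * y ^ 2).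
Definition qform (n A B Cc : R) := - B ^ 2 / (4 * n) + A * Cc.
Definition phase (n d A B Cc : R) := 2 * PI * qform n A B Cc / d.
Definition pzv (n A B Cc : R) x y := - pnum n A B Cc x y / (sqrt n * y).
Definition phi_term (n d A B Cc : R) x y u v : C :=
  (v * pzv n A B Cc x y * exp (- 2 * PI * v * decay n A B Cc x y / d) * cos (phase n d A B Cc * u),
   v * pzv n A B Cc x y * exp (- 2 * PI * v * decay n A B Cc x y / d) * sin (phase n d A B Cc * u)).

Lemma cexp_form (q u v : R) : cexp (2 * PI * Ci * RtoC q * (u, v))%C =
  (exp (- 2 * PI * q * v) * cos (2 * PI * q * u), exp (- 2 * PI * q * v) * sin (2 * PI * q * u)).
Proof. unfold cexp, Cmult, RtoC, Ci; simpl. f_equal; f_equal; try f_equal; ring. Qed.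

Lemma p_z_lamL' N a b c x y : (1 <= N)%Z -> 0 < y ->
  p_z N (x, y) (lamL' N a b c) = pzv (IZR N) (IZR a) (IZR b) (IZR c) x y.
Proof. intros HN Hy. assert (Hn : 0 < IZR N) by (apply (IZR_lt 0); lia).
  pose proof (sqrt_lt_R0 _ Hn).
  unfold p_z, bil, tr_mul, lamL', lam_z, pzv, pnum; simpl. field; repeat split; lra. Qed.

Lemma QD_lamL' N D a b c : (1 <= N)%Z -> D <> 0%Z -> QD N D (lamL' N a b c) = qform (IZR N) (IZR a) (IZR b) (IZR c) / IZR (Z.abs D).
Proof. intros HN HD. assert (Hn : 0 < IZR N) by (apply (IZR_lt 0); lia).
  assert (Hd : 0 < IZR (Z.abs D)) by (apply (IZR_lt 0); lia).
  unfold QD, Qf, det2, lamL', qform; simpl. field; repeat split; lra. Qed.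

Lemma Rf_lamL' N a b c x y : (1 <= N)%Z -> 0 < y ->
  Rf N (lamL' N a b c) (x, y) = pzv (IZR N) (IZR a) (IZR b) (IZR c) x y ^ 2 / 2 - 2 * qform (IZR N) (IZR a) (IZR b) (IZR c).
Proof. intros HN Hy. unfold Rf. rewrite p_z_lamL' by auto. assert (Hn : 0 < IZR N) by (apply (IZR_lt 0); lia).
  unfold bil, tr_mul, lamL', qform; simpl. field; repeat split; lra. Qed.

Lemma decay_eq n A B Cc x y : 0 < n -> 0 < y ->
  pzv n A B Cc x y ^ 2 / 2 - qform n A B Cc = decay n A B Cc x y.
Proof. intros Hn Hy. pose proof (sqrt_lt_R0 _ Hn). unfold pzv, qform, decay, snorm, pnum, qre, qim.
  assert (E : (sqrt n) ^ 2 = n) by (simpl; rewrite Rmult_1_r; apply sqrt_sqrt; lra).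
  field_simplify; try (split; lra). rewrite E. field. lra.
Qed.

Lemma phi_term_eq N D a b c u v x y : (1 <= N)%Z -> D <> 0%Z -> 0 < v -> 0 < y ->
  (RtoC (sqrt v) * phi N D a b c (u, v) (x, y))%C =
  phi_term (IZR N) (IZR (Z.abs D)) (IZR a) (IZR b) (IZR c) x y u v.
Proof.
  intros HN HD Hv Hy. assert (Hn : 0 < IZR N) by (apply (IZR_lt 0); lia).
  assert (Hd : 0 < IZR (Z.abs D)) by (apply (IZR_lt 0); lia).
  unfold phi. simpl Im. rewrite QD_lamL', cexp_form, p_z_lamL', Rf_lamL' by auto.
  unfold phi_term, phase. rewrite <- (decay_eq (IZR N)) by auto.
  unfold Cmult, RtoC; simpl.
  set (q := qform (IZR N) (IZR a) (IZR b) (IZR c)). set (p := pzv (IZR N) (IZR a) (IZR b) (IZR c) x y).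
  set (dd := IZR (Z.abs D)) in *.
  assert (Es : sqrt v * sqrt v = v) by (apply sqrt_sqrt; lra).
  assert (Ee : exp (- 2 * PI * (q / dd) * v) * exp (-2 * PI * v * (p ^ 2 / 2 - 2 * q) / dd) =
     exp (-2 * PI * v * (p ^ 2 / 2 - q) / dd)) by (rewrite <- exp_plus; f_equal; field; lra).
  replace (2 * PI * (q / dd) * u) with (2 * PI * q / dd * u) by (field; lra).
  change (p * (p * 1)) with (p ^ 2). apply f_equal2.
  - transitivity ((sqrt v * sqrt v) * p * (exp (- 2 * PI * (q / dd) * v) * exp (-2 * PI * v * (p ^ 2 / 2 - 2 * q) / dd)) * cos (2 * PI * q / dd * u)); [ring|].
    rewrite Es, Ee. ring.
  - transitivity ((sqrt v * sqrt v) * p * (exp (- 2 * PI * (q / dd) * v) * exp (-2 * PI * v * (p ^ 2 / 2 - 2 * q) / dd)) * sin (2 * PI * q / dd * u)); [ring|].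
    rewrite Es, Ee. ring.
Qed.

Definition phiSh_term (n d A B Cc : R) x y u v : C :=
  (- sqrt v / (4 * n * y ^ 2) * exp (- 2 * PI * v * decay n A B Cc x y / d) *
     (qre n A B Cc x y * cos (phase n d A B Cc * u) + qim n A B Cc x y * sin (phase n d A B Cc * u)),
   - sqrt v / (4 * n * y ^ 2) * exp (- 2 * PI * v * decay n A B Cc x y / d) *
     (qim n A B Cc x y * cos (phase n d A B Cc * u) - qre n A B Cc x y * sin (phase n d A B Cc * u))).

Lemma phiSh_term_eq N D a b c u v x y : (1 <= N)%Z -> D <> 0%Z -> 0 < v -> 0 < y ->
  Cconj (RtoC (sqrt v) * phiSh N D a b c (u, v) (x, y))%C =
  phiSh_term (IZR N) (IZR (Z.abs D)) (IZR a) (IZR b) (IZR c) x y u v.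
Proof.
  intros HN HD Hv Hy. assert (Hn : 0 < IZR N) by (apply (IZR_lt 0); lia).
  assert (Hd : 0 < IZR (Z.abs D)) by (apply (IZR_lt 0); lia).
  unfold phiSh. simpl Im. rewrite QD_lamL', cexp_form, Rf_lamL' by auto.
  unfold phiSh_term, phase. rewrite <- (decay_eq (IZR N)) by auto.
  set (q := qform (IZR N) (IZR a) (IZR b) (IZR c)). set (p := pzv (IZR N) (IZR a) (IZR b) (IZR c) x y).
  set (dd := IZR (Z.abs D)) in *.
  replace (2 * PI * (q / dd) * u) with (2 * PI * q / dd * u) by (field; lra).
  assert (Ee : exp (-2 * PI * v * (p ^ 2 / 2 - q) / dd) = exp (- 2 * PI * (q / dd) * v) * exp (-2 * PI * v * (p ^ 2 / 2 - 2 * q) / dd))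
     by (rewrite <- exp_plus; f_equal; field; lra).
  rewrite Ee.
  set (e1 := exp (- 2 * PI * (q / dd) * v)). set (e2 := exp (-2 * PI * v * (p ^ 2 / 2 - 2 * q) / dd)).
  set (cs := cos (2 * PI * q / dd * u)). set (sn := sin (2 * PI * q / dd * u)).
  unfold qre, qim.
  unfold Cconj, Cmult, Cdiv, Cinv, Cminus, Cplus, Copp, RtoC; simpl.
  apply f_equal2; field; repeat split; try lra; nra.
Qed.

Definition phi_term_du (n d A B Cc : R) x y u v : C :=
  (- (v * pzv n A B Cc x y * exp (- 2 * PI * v * decay n A B Cc x y / d) * phase n d A B Cc * sin (phase n d A B Cc * u)),
   v * pzv n A B Cc x y * exp (- 2 * PI * v * decay n A B Cc x y / d) * phase n d A B Cc * cos (phase n d A B Cc * u)).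
Definition phi_term_dv (n d A B Cc : R) x y u v : C :=
  (pzv n A B Cc x y * (1 - 2 * PI * v * decay n A B Cc x y / d) * exp (- 2 * PI * v * decay n A B Cc x y / d) * cos (phase n d A B Cc * u),
   pzv n A B Cc x y * (1 - 2 * PI * v * decay n A B Cc x y / d) * exp (- 2 * PI * v * decay n A B Cc x y / d) * sin (phase n d A B Cc * u)).

Lemma continuity_pt_of_ex_derive (f : R -> R) x : ex_derive f x -> continuity_pt f x.
Proof. intros H. apply continuity_pt_filterlim. apply (ex_derive_continuous f x H). Qed.

Lemma cderiv_phi_term_u n d A B Cc x y v u : 0 < n -> 0 < d -> y <> 0 ->
  cderiv (fun s => phi_term n d A B Cc x y s v) u (phi_term_du n d A B Cc x y u v).
Proof. intros Hn Hd Hy. split; simpl; auto_derive; auto; ring. Qed.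

Lemma cderiv_phi_term_v n d A B Cc x y u v : 0 < n -> 0 < d -> y <> 0 ->
  cderiv (fun s => phi_term n d A B Cc x y u s) v (phi_term_dv n d A B Cc x y u v).
Proof. intros Hn Hd Hy. split; simpl; auto_derive; auto; unfold Rdiv; ring. Qed.

Lemma continuous_phi_term_du n d A B Cc x y v u : 0 < n -> 0 < d -> y <> 0 ->
  continuity_pt (fun s => Re (phi_term_du n d A B Cc x y s v)) u /\ continuity_pt (fun s => Im (phi_term_du n d A B Cc x y s v)) u.
Proof. intros Hn Hd Hy. split; apply continuity_pt_of_ex_derive; simpl; auto_derive; auto. Qed.

Lemma continuous_phi_term_dv n d A B Cc x y u v : 0 < n -> 0 < d -> y <> 0 ->
  continuity_pt (fun s => Re (phi_term_dv n d A B Cc x y u s)) v /\ continuity_pt (fun s => Im (phi_term_dv n d A B Cc x y u s)) v.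
Proof. intros Hn Hd Hy. split; apply continuity_pt_of_ex_derive; simpl; auto_derive; auto. Qed.

Definition sh_coef (n v : R) y := - sqrt v / (4 * n * y ^ 2).
Definition gauss_factor (n d A B Cc v : R) x y := exp (- 2 * PI * v * decay n A B Cc x y / d).
Definition sh_re (n d A B Cc u : R) x y := qre n A B Cc x y * cos (phase n d A B Cc * u) + qim n A B Cc x y * sin (phase n d A B Cc * u).
Definition sh_im (n d A B Cc u : R) x y := qim n A B Cc x y * cos (phase n d A B Cc * u) - qre n A B Cc x y * sin (phase n d A B Cc * u).
Definition pnum_dx (n A B Cc : R) (x y : R) := 2 * Cc * n * x - B.
Definition qim_dx (n A B Cc : R) (x y : R) := 2 * Cc * n * y.
Definition decay_dx (n A B Cc : R) x y :=
  (2 * pnum n A B Cc x y * pnum_dx n A B Cc x y + 2 * qre n A B Cc x y * pnum_dx n A B Cc x y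
   + 2 * qim n A B Cc x y * qim_dx n A B Cc x y) / (4 * n * y ^ 2).
Definition decay_dy (n A B Cc : R) x y :=
  (2 * pnum n A B Cc x y * qim_dx n A B Cc x y - 2 * qre n A B Cc x y * qim_dx n A B Cc x y
   + 2 * qim n A B Cc x y * pnum_dx n A B Cc x y) / (4 * n * y ^ 2) - 2 * snorm n A B Cc x y / (4 * n * y ^ 3).
Definition sh_re_dx (n d A B Cc u : R) x y := pnum_dx n A B Cc x y * cos (phase n d A B Cc * u) + qim_dx n A B Cc x y * sin (phase n d A B Cc * u).
Definition sh_im_dx (n d A B Cc u : R) x y := qim_dx n A B Cc x y * cos (phase n d A B Cc * u) - pnum_dx n A B Cc x y * sin (phase n d A B Cc * u).
Definition sh_re_dy (n d A B Cc u : R) x y := - qim_dx n A B Cc x y * cos (phase n d A B Cc * u) + pnum_dx n A B Cc x y * sin (phase n d A B Cc * u).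
Definition sh_im_dy (n d A B Cc u : R) x y := pnum_dx n A B Cc x y * cos (phase n d A B Cc * u) + qim_dx n A B Cc x y * sin (phase n d A B Cc * u).
Definition sh_coef_dy (n v : R) y := sqrt v / (2 * n * y ^ 3).

Definition phiSh_term_dx (n d A B Cc : R) x y u v : C :=
  (sh_coef n v y * gauss_factor n d A B Cc v x y * (sh_re_dx n d A B Cc u x y - 2 * PI * v / d * decay_dx n A B Cc x y * sh_re n d A B Cc u x y),
   sh_coef n v y * gauss_factor n d A B Cc v x y * (sh_im_dx n d A B Cc u x y - 2 * PI * v / d * decay_dx n A B Cc x y * sh_im n d A B Cc u x y)).
Definition phiSh_term_dy (n d A B Cc : R) x y u v : C :=
  (sh_coef_dy n v y * gauss_factor n d A B Cc v x y * sh_re n d A B Cc u x y +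
   sh_coef n v y * gauss_factor n d A B Cc v x y * (sh_re_dy n d A B Cc u x y - 2 * PI * v / d * decay_dy n A B Cc x y * sh_re n d A B Cc u x y),
   sh_coef_dy n v y * gauss_factor n d A B Cc v x y * sh_im n d A B Cc u x y +
   sh_coef n v y * gauss_factor n d A B Cc v x y * (sh_im_dy n d A B Cc u x y - 2 * PI * v / d * decay_dy n A B Cc x y * sh_im n d A B Cc u x y)).

Lemma is_derive_decay_x n A B Cc y x : 0 < n -> y <> 0 -> is_derive (fun s => decay n A B Cc s y) x (decay_dx n A B Cc x y).
Proof. intros Hn Hy. unfold decay, decay_dx, snorm, pnum, qre, qim, pnum_dx, qim_dx. auto_derive; auto. field. split; lra. Qed.
Lemma is_derive_decay_y n A B Cc x y : 0 < n -> y <> 0 -> is_derive (fun s => decay n A B Cc x s) y (decay_dy n A B Cc x y).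
Proof. intros Hn Hy. unfold decay, decay_dy, snorm, pnum, qre, qim, pnum_dx, qim_dx. auto_derive.
  - repeat apply Rmult_integral_contrapositive_currified; lra.
  - field. split; lra. Qed.
Lemma phiSh_term_factor n d A B Cc x y u v : phiSh_term n d A B Cc x y u v =
  (sh_coef n v y * gauss_factor n d A B Cc v x y * sh_re n d A B Cc u x y, sh_coef n v y * gauss_factor n d A B Cc v x y * sh_im n d A B Cc u x y).
Proof. reflexivity. Qed.

Lemma is_derive_gauss_factor_x n d A B Cc v y x : 0 < n -> 0 < d -> y <> 0 ->
  is_derive (fun s => gauss_factor n d A B Cc v s y) x (- 2 * PI * v / d * decay_dx n A B Cc x y * gauss_factor n d A B Cc v x y).
Proof. intros Hn Hd Hy. unfold gauss_factor. auto_derive.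
  - eexists; apply is_derive_decay_x; auto.
  - replace (Derive (fun x0 : R => decay n A B Cc x0 y) x) with (decay_dx n A B Cc x y)
      by (symmetry; apply is_derive_unique; apply is_derive_decay_x; auto). unfold Rdiv. ring. Qed.
Lemma is_derive_gauss_factor_y n d A B Cc v x y : 0 < n -> 0 < d -> y <> 0 ->
  is_derive (fun s => gauss_factor n d A B Cc v x s) y (- 2 * PI * v / d * decay_dy n A B Cc x y * gauss_factor n d A B Cc v x y).
Proof. intros Hn Hd Hy. unfold gauss_factor. auto_derive.
  - eexists; apply is_derive_decay_y; auto.
  - replace (Derive (fun x0 : R => decay n A B Cc x x0) y) with (decay_dy n A B Cc x y)
      by (symmetry; apply is_derive_unique; apply is_derive_decay_y; auto). unfold Rdiv. ring. Qed.

Ltac derive_side dEl :=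
  repeat match goal with |- ex_derive _ _ => eexists; apply dEl; auto | |- _ /\ _ => split
     | |- _ <> 0 => repeat apply Rmult_integral_contrapositive_currified; lra | |- True => exact I end.

Lemma cderiv_phiSh_term_x n d A B Cc y u v x : 0 < n -> 0 < d -> y <> 0 ->
  cderiv (fun s => phiSh_term n d A B Cc s y u v) x (phiSh_term_dx n d A B Cc x y u v).
Proof. intros Hn Hd Hy. split; (eapply is_derive_ext; [intros t; rewrite phiSh_term_factor; reflexivity|]); simpl;
  unfold phiSh_term_dx, sh_re, sh_im, sh_re_dx, sh_im_dx, pnum_dx, qim_dx, qre, qim; simpl; auto_derive;
  try (eexists; apply is_derive_gauss_factor_x; auto);
  match goal with |- context [Derive ?f x] => replace (Derive f x) with
    (- 2 * PI * v / d * decay_dx n A B Cc x y * gauss_factor n d A B Cc v x y) by (symmetry; apply is_derive_unique; apply is_derive_gauss_factor_x; auto) end;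
  unfold Rdiv; ring. Qed.

Lemma cderiv_phiSh_term_y n d A B Cc x u v y : 0 < n -> 0 < d -> 0 < y ->
  cderiv (fun s => phiSh_term n d A B Cc x s u v) y (phiSh_term_dy n d A B Cc x y u v).
Proof. intros Hn Hd Hy. assert (Hy' : y <> 0) by lra. split; (eapply is_derive_ext; [intros t; rewrite phiSh_term_factor; reflexivity|]); simpl;
  unfold phiSh_term_dy, sh_coef, sh_coef_dy, sh_re, sh_im, sh_re_dy, sh_im_dy, pnum_dx, qim_dx, qre, qim; simpl; auto_derive;
  try (derive_side is_derive_gauss_factor_y);
  match goal with |- context [Derive ?f y] => replace (Derive f y) with
    (- 2 * PI * v / d * decay_dy n A B Cc x y * gauss_factor n d A B Cc v x y) by (symmetry; apply is_derive_unique; apply is_derive_gauss_factor_y; auto) end;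
  field; lra. Qed.

Lemma continuous_phiSh_term_dx n d A B Cc y u v x : 0 < n -> 0 < d -> y <> 0 ->
  continuity_pt (fun s => Re (phiSh_term_dx n d A B Cc s y u v)) x /\ continuity_pt (fun s => Im (phiSh_term_dx n d A B Cc s y u v)) x.
Proof. intros Hn Hd Hy. split; apply continuity_pt_of_ex_derive; unfold phiSh_term_dx, sh_coef, sh_re, sh_im, sh_re_dx, sh_im_dx, decay_dx, pnum_dx, qim_dx, pnum, qre, qim; simpl;
  auto_derive; derive_side is_derive_gauss_factor_x. Qed.

Lemma continuous_phiSh_term_dy n d A B Cc x u v y : 0 < n -> 0 < d -> 0 < y ->
  continuity_pt (fun s => Re (phiSh_term_dy n d A B Cc x s u v)) y /\ continuity_pt (fun s => Im (phiSh_term_dy n d A B Cc x s u v)) y.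
Proof. intros Hn Hd Hy. assert (y <> 0) by lra. split; apply continuity_pt_of_ex_derive; unfold phiSh_term_dy, sh_coef, sh_coef_dy, sh_re, sh_im, sh_re_dy, sh_im_dy, decay_dy, snorm, pnum_dx, qim_dx, pnum, qre, qim; simpl;
  auto_derive; derive_side is_derive_gauss_factor_y. Qed.

Lemma abs_le_sq (a : R) : Rabs a <= 1 + a ^ 2.
Proof. unfold Rabs. destruct (Rcase_abs a); nra. Qed.

Lemma snorm_ge0 n A B Cc x y : 0 <= snorm n A B Cc x y.
Proof. unfold snorm. nra. Qed.

Lemma pnum_bound n A B Cc x y : Rabs (pnum n A B Cc x y) <= 1 + snorm n A B Cc x y.
Proof. pose proof (abs_le_sq (pnum n A B Cc x y)). unfold snorm. nra. Qed.
Lemma qre_bound n A B Cc x y : Rabs (qre n A B Cc x y) <= 1 + snorm n A B Cc x y.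
Proof. pose proof (abs_le_sq (qre n A B Cc x y)). unfold snorm. nra. Qed.
Lemma qim_bound n A B Cc x y : Rabs (qim n A B Cc x y) <= 1 + snorm n A B Cc x y.
Proof. pose proof (abs_le_sq (qim n A B Cc x y)). unfold snorm. nra. Qed.

Lemma pnum_dx_eq n A B Cc x y : y <> 0 -> pnum_dx n A B Cc x y = qim n A B Cc x y / y.
Proof. intros Hy. unfold pnum_dx, qim. field. auto. Qed.
Lemma qim_dx_eq n A B Cc x y : 0 < n -> y <> 0 -> qim_dx n A B Cc x y = (pnum n A B Cc x y - qre n A B Cc x y) / y.
Proof. intros Hn Hy. unfold qim_dx, pnum, qre. field. auto. Qed.
Lemma qform_eq n A B Cc x y : 0 < n -> y <> 0 ->
  qform n A B Cc = (pnum n A B Cc x y ^ 2 - qre n A B Cc x y ^ 2 - qim n A B Cc x y ^ 2) / (4 * n * y ^ 2).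
Proof. intros Hn Hy. unfold qform, pnum, qre, qim. field. split; lra. Qed.

Lemma pnum_dx_bound n A B Cc x y : 0 < y -> Rabs (pnum_dx n A B Cc x y) <= (1 + snorm n A B Cc x y) / y.
Proof. intros Hy. rewrite pnum_dx_eq by lra. unfold Rdiv. rewrite Rabs_mult, Rabs_inv, (Rabs_pos_eq y) by lra.
  apply Rmult_le_compat_r; [left; apply Rinv_0_lt_compat; auto| apply qim_bound]. Qed.
Lemma qim_dx_bound n A B Cc x y : 0 < n -> 0 < y -> Rabs (qim_dx n A B Cc x y) <= 2 * (1 + snorm n A B Cc x y) / y.
Proof. intros Hn Hy. rewrite qim_dx_eq by lra. unfold Rdiv. rewrite Rabs_mult, Rabs_inv, (Rabs_pos_eq y) by lra.
  apply Rmult_le_compat_r; [left; apply Rinv_0_lt_compat; auto|].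
  eapply Rle_trans; [apply Rabs_triang|]. rewrite Rabs_Ropp. pose proof (pnum_bound n A B Cc x y). pose proof (qre_bound n A B Cc x y). lra. Qed.
Lemma qform_bound n A B Cc x y : 0 < n -> 0 < y -> Rabs (qform n A B Cc) <= (1 + snorm n A B Cc x y) / (4 * n * y ^ 2).
Proof. intros Hn Hy. rewrite (qform_eq n A B Cc x y) by lra. unfold Rdiv.
  assert (0 < 4 * n * y ^ 2) by (apply Rmult_lt_0_compat; [lra| apply pow_lt; auto]).
  rewrite Rabs_mult, (Rabs_pos_eq (/ _)) by (left; apply Rinv_0_lt_compat; auto).
  apply Rmult_le_compat_r; [left; apply Rinv_0_lt_compat; auto|]. unfold snorm.
  apply Rabs_le. split; nra. Qed.

Lemma sq_abs_le (x X : R) : Rabs x <= X -> x ^ 2 <= X ^ 2.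
Proof. intros HX. pose proof (Rabs_pos x). rewrite <- (pow2_abs x). apply pow_incr. lra. Qed.

Lemma coeffC_sq_le n A B Cc x y y1 : 0 < n -> 0 < y1 -> y1 <= y ->
  Cc ^ 2 <= / (2 * n ^ 2 * y1 ^ 4) * snorm n A B Cc x y.
Proof.
  intros Hn Hy1 Hy.
  set (p := pnum n A B Cc x y). set (r := qre n A B Cc x y). set (q := qim n A B Cc x y).
  assert (HS : snorm n A B Cc x y = p ^ 2 + r ^ 2 + q ^ 2) by reflexivity.
  assert (EC : Cc = (p - r) / (2 * n * y ^ 2)) by (unfold p, r, pnum, qre; field; lra).
  rewrite HS, EC.
  replace (((p - r) / (2 * n * y ^ 2)) ^ 2) with ((p - r) ^ 2 / (4 * n ^ 2) * (/ y ^ 2) ^ 2) by (field; lra).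
  replace (/ (2 * n ^ 2 * y1 ^ 4) * (p ^ 2 + r ^ 2 + q ^ 2))
    with (2 * (p ^ 2 + r ^ 2 + q ^ 2) / (4 * n ^ 2) * (/ y1 ^ 2) ^ 2) by (field; lra).
  assert (Hw : / y ^ 2 <= / y1 ^ 2) by (apply Rinv_le_contravar; [apply pow_lt; auto| apply pow_incr; lra]).
  assert (Hw0 : 0 < / y ^ 2) by (apply Rinv_0_lt_compat, pow_lt; lra).
  apply Rmult_le_compat.
  - apply Rdiv_le_0_compat; [apply pow2_ge_0| nra].
  - nra.
  - unfold Rdiv; apply Rmult_le_compat_r; [left; apply Rinv_0_lt_compat; nra|].
    pose proof (pow2_ge_0 (p + r)); pose proof (pow2_ge_0 q); nra.
  - apply pow_incr; lra.
Qed.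

Lemma coeffB_sq_le n A B Cc x y X y1 : 0 < n -> 0 < y1 -> y1 <= y -> Rabs x <= X ->
  B ^ 2 <= (8 * n ^ 2 * X ^ 2 * / (2 * n ^ 2 * y1 ^ 4) + 2 / y1 ^ 2) * snorm n A B Cc x y.
Proof.
  intros Hn Hy1 Hy HX.
  set (kC := / (2 * n ^ 2 * y1 ^ 4)). set (S := snorm n A B Cc x y). set (q := qim n A B Cc x y).
  assert (HC : Cc ^ 2 <= kC * S) by (apply (coeffC_sq_le n A B Cc x y y1); auto).
  assert (HqS : q ^ 2 <= S) by (unfold S, snorm; fold q; nra).
  assert (Hw : / y ^ 2 <= / y1 ^ 2) by (apply Rinv_le_contravar; [apply pow_lt; lra| apply pow_incr; lra]).
  assert (Hx2 := sq_abs_le x X HX).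
  assert (EB : B = 2 * Cc * n * x - q / y) by (unfold q, qim; field; lra).
  assert (h1 : (2 * Cc * n * x) ^ 2 <= 4 * n ^ 2 * (kC * S * X ^ 2)).
  { replace ((2 * Cc * n * x) ^ 2) with (4 * n ^ 2 * (Cc ^ 2 * x ^ 2)) by ring.
    apply Rmult_le_compat_l; [nra|]. apply Rmult_le_compat; try lra; apply pow2_ge_0. }
  assert (h2 : (q / y) ^ 2 <= S * / y1 ^ 2).
  { replace ((q / y) ^ 2) with (q ^ 2 * (/ y ^ 2)) by (field; lra).
    apply Rmult_le_compat; try lra; [apply pow2_ge_0 | left; apply Rinv_0_lt_compat, pow_lt; lra]. }
  assert (E : (8 * n ^ 2 * X ^ 2 * kC + 2 / y1 ^ 2) * S = 2 * (4 * n ^ 2 * (kC * S * X ^ 2)) + 2 * (S * / y1 ^ 2))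
    by (field; lra).
  rewrite E, EB. pose proof (pow2_ge_0 (2 * Cc * n * x + q / y)). nra.
Qed.

Lemma coeffs_bound_by_snorm n A B Cc x y X y1 y2 : 0 < n -> 0 < y1 -> y1 <= y <= y2 -> Rabs x <= X ->
  let kC := / (2 * n ^ 2 * y1 ^ 4) in
  let kB := 8 * n ^ 2 * X ^ 2 * kC + 2 / y1 ^ 2 in
  let kA := 3 + 3 * n ^ 2 * (X ^ 2 + y2 ^ 2) ^ 2 * kC + 3 * X ^ 2 * kB in
  A ^ 2 + B ^ 2 + Cc ^ 2 <= (kA + kB + kC) * snorm n A B Cc x y.
Proof.
  intros Hn Hy1 Hy HX kC kB kA.
  set (S := snorm n A B Cc x y). set (p := pnum n A B Cc x y).
  assert (HC : Cc ^ 2 <= kC * S) by (apply (coeffC_sq_le n A B Cc x y y1); lra).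
  assert (HB : B ^ 2 <= kB * S) by (apply (coeffB_sq_le n A B Cc x y X y1); lra).
  assert (HpS : p ^ 2 <= S) by (unfold S, snorm; fold p; nra).
  assert (Hx2 := sq_abs_le x X HX).
  assert (Hzz : (x ^ 2 + y ^ 2) ^ 2 <= (X ^ 2 + y2 ^ 2) ^ 2)
    by (apply pow_incr; assert (y ^ 2 <= y2 ^ 2) by (apply pow_incr; lra); nra).
  assert (EA : A = p + - (Cc * n * (x ^ 2 + y ^ 2)) + B * x) by (unfold p, pnum; ring).
  assert (HA : A ^ 2 <= kA * S).
  { rewrite EA. unfold kA.
    assert (Hs : forall a b c : R, (a + b + c) ^ 2 <= 3 * (a ^ 2 + b ^ 2 + c ^ 2)).
    { intros a b c. pose proof (pow2_ge_0 (a-b)). pose proof (pow2_ge_0 (b-c)). pose proof (pow2_ge_0 (a-c)). nra. }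
    eapply Rle_trans; [apply Hs|].
    assert ((- (Cc * n * (x ^ 2 + y ^ 2))) ^ 2 <= n ^ 2 * (X ^ 2 + y2 ^ 2) ^ 2 * (kC * S)).
    { replace ((- (Cc * n * (x ^ 2 + y ^ 2))) ^ 2) with (n ^ 2 * (x ^ 2 + y ^ 2) ^ 2 * Cc ^ 2) by ring.
      apply Rmult_le_compat; try nra. }
    assert ((B * x) ^ 2 <= X ^ 2 * (kB * S)).
    { replace ((B * x) ^ 2) with (x ^ 2 * B ^ 2) by ring. apply Rmult_le_compat; try nra. }
    nra. }
  nra.
Qed.

(* An index (A, B, C, s) collects the coordinates of lambda and the real variable s being
   differentiated in; poly_bounded f says that f is bounded by a polynomial in 1 + snorm,
   uniformly on the domain. *)
Definition Idx := (R * R * R * R)%type.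
Definition iA (i : Idx) := fst (fst (fst i)).
Definition iB (i : Idx) := snd (fst (fst i)).
Definition iC (i : Idx) := snd (fst i).
Definition iS (i : Idx) := snd i.

Section PolyBounds.
Variables (n y1 : R) (xi yi : Idx -> R) (Dom : Idx -> Prop).
Hypothesis Hn : 0 < n.
Hypothesis Hy1 : 0 < y1.
Hypothesis Hyy : forall i, Dom i -> y1 <= yi i.

Definition weight i := 1 + snorm n (iA i) (iB i) (iC i) (xi i) (yi i).
Lemma weight_ge1 i : 1 <= weight i.
Proof. unfold weight. pose proof (snorm_ge0 n (iA i) (iB i) (iC i) (xi i) (yi i)). lra. Qed.

Definition poly_bounded (f : Idx -> R) := exists m K, 0 <= K /\ forall i, Dom i -> Rabs (f i) <= K * weight i ^ m.

Lemma poly_bound_raise f m K m' : (m <= m')%nat -> 0 <= K -> (forall i, Dom i -> Rabs (f i) <= K * weight i ^ m) ->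
  forall i, Dom i -> Rabs (f i) <= K * weight i ^ m'.
Proof. intros Hm HK H i Di. eapply Rle_trans; [apply H; auto|]. apply Rmult_le_compat_l; auto.
  apply Rle_pow; auto. apply weight_ge1. Qed.

Lemma poly_bounded_plus f g : poly_bounded f -> poly_bounded g -> poly_bounded (fun i => f i + g i).
Proof. intros [m1 [K1 [H1 B1]]] [m2 [K2 [H2 B2]]]. exists (Nat.max m1 m2), (K1 + K2). split; [lra|].
  intros i Di. eapply Rle_trans; [apply Rabs_triang|].
  pose proof (poly_bound_raise f m1 K1 (Nat.max m1 m2) (Nat.le_max_l _ _) H1 B1 i Di).
  pose proof (poly_bound_raise g m2 K2 (Nat.max m1 m2) (Nat.le_max_r _ _) H2 B2 i Di). lra. Qed.
Lemma poly_bounded_opp f : poly_bounded f -> poly_bounded (fun i => - f i).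
Proof. intros [m [K [H B]]]. exists m, K. split; auto. intros i Di. rewrite Rabs_Ropp; auto. Qed.
Lemma poly_bounded_minus f g : poly_bounded f -> poly_bounded g -> poly_bounded (fun i => f i - g i).
Proof. intros. apply (poly_bounded_plus f (fun i => - g i)); auto. apply poly_bounded_opp; auto. Qed.
Lemma poly_bounded_mult f g : poly_bounded f -> poly_bounded g -> poly_bounded (fun i => f i * g i).
Proof. intros [m1 [K1 [H1 B1]]] [m2 [K2 [H2 B2]]]. exists (m1 + m2)%nat, (K1 * K2). split; [nra|].
  intros i Di. rewrite Rabs_mult, pow_add. specialize (B1 i Di). specialize (B2 i Di).
  replace (K1 * K2 * (weight i ^ m1 * weight i ^ m2)) with ((K1 * weight i ^ m1) * (K2 * weight i ^ m2)) by ring.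
  apply Rmult_le_compat; auto; apply Rabs_pos. Qed.
Lemma poly_bounded_cst (c : R) f : (forall i, Dom i -> Rabs (f i) <= c) -> poly_bounded f.
Proof. intros H. exists 0%nat, (Rmax c 0). split; [apply Rmax_r|]. intros i Di. simpl. rewrite Rmult_1_r.
  eapply Rle_trans; [apply H; auto| apply Rmax_l]. Qed.
Lemma poly_bounded_weight (c : R) f : 0 <= c -> (forall i, Dom i -> Rabs (f i) <= c * weight i) -> poly_bounded f.
Proof. intros Hc H. exists 1%nat, c. split; auto. intros i Di. simpl. rewrite Rmult_1_r. auto. Qed.
Lemma poly_bounded_const (c : R) : poly_bounded (fun _ => c).
Proof. apply (poly_bounded_cst (Rabs c)). intros; lra. Qed.
Lemma poly_bounded_cos f : poly_bounded (fun i => cos (f i)).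
Proof. apply (poly_bounded_cst 1). intros; apply Rabs_le; pose proof (COS_bound (f i)); lra. Qed.
Lemma poly_bounded_sin f : poly_bounded (fun i => sin (f i)).
Proof. apply (poly_bounded_cst 1). intros; apply Rabs_le; pose proof (SIN_bound (f i)); lra. Qed.

Lemma poly_bounded_pnum : poly_bounded (fun i => pnum n (iA i) (iB i) (iC i) (xi i) (yi i)).
Proof. apply (poly_bounded_weight 1); [lra|]. intros i Di. rewrite Rmult_1_l. apply pnum_bound. Qed.
Lemma poly_bounded_qre : poly_bounded (fun i => qre n (iA i) (iB i) (iC i) (xi i) (yi i)).
Proof. apply (poly_bounded_weight 1); [lra|]. intros i Di. rewrite Rmult_1_l. apply qre_bound. Qed.
Lemma poly_bounded_qim : poly_bounded (fun i => qim n (iA i) (iB i) (iC i) (xi i) (yi i)).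
Proof. apply (poly_bounded_weight 1); [lra|]. intros i Di. rewrite Rmult_1_l. apply qim_bound. Qed.
Lemma poly_bounded_snorm : poly_bounded (fun i => snorm n (iA i) (iB i) (iC i) (xi i) (yi i)).
Proof. apply (poly_bounded_weight 1); [lra|]. intros i Di. rewrite Rmult_1_l. unfold weight.
  pose proof (snorm_ge0 n (iA i) (iB i) (iC i) (xi i) (yi i)). rewrite Rabs_pos_eq; lra. Qed.
Lemma poly_bounded_pnum_dx : poly_bounded (fun i => pnum_dx n (iA i) (iB i) (iC i) (xi i) (yi i)).
Proof. apply (poly_bounded_weight (/ y1)); [left; apply Rinv_0_lt_compat; auto|]. intros i Di.
  pose proof (Hyy i Di). eapply Rle_trans; [apply pnum_dx_bound; lra|]. unfold Rdiv, weight. rewrite Rmult_comm.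
  apply Rmult_le_compat_r; [pose proof (snorm_ge0 n (iA i) (iB i) (iC i) (xi i) (yi i)); lra|].
  apply Rinv_le_contravar; lra. Qed.
Lemma poly_bounded_qim_dx : poly_bounded (fun i => qim_dx n (iA i) (iB i) (iC i) (xi i) (yi i)).
Proof. apply (poly_bounded_weight (2 / y1)); [left; apply Rdiv_lt_0_compat; lra|]. intros i Di.
  pose proof (Hyy i Di). eapply Rle_trans; [apply qim_dx_bound; lra|]. unfold Rdiv, weight.
  pose proof (snorm_ge0 n (iA i) (iB i) (iC i) (xi i) (yi i)).
  assert (/ yi i <= / y1) by (apply Rinv_le_contravar; lra).
  assert (0 < / yi i) by (apply Rinv_0_lt_compat; lra). nra. Qed.
Lemma poly_bounded_qform : poly_bounded (fun i => qform n (iA i) (iB i) (iC i)).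
Proof. apply (poly_bounded_weight (/ (4 * n * y1 ^ 2))); [left; apply Rinv_0_lt_compat; apply Rmult_lt_0_compat; [lra|apply pow_lt; lra]|].
  intros i Di. pose proof (Hyy i Di). eapply Rle_trans; [apply (qform_bound n _ _ _ (xi i) (yi i)); lra|].
  unfold Rdiv, weight. rewrite Rmult_comm. apply Rmult_le_compat_r; [pose proof (snorm_ge0 n (iA i) (iB i) (iC i) (xi i) (yi i)); lra|].
  apply Rinv_le_contravar. apply Rmult_lt_0_compat; [lra|apply pow_lt; lra].
  apply Rmult_le_compat_l; [lra|]. apply pow_incr; lra. Qed.
Lemma poly_bounded_inv_pow k : poly_bounded (fun i => / (yi i ^ k)).
Proof. apply (poly_bounded_cst (/ (y1 ^ k))). intros i Di. pose proof (Hyy i Di).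
  rewrite Rabs_pos_eq by (left; apply Rinv_0_lt_compat, pow_lt; lra).
  apply Rinv_le_contravar; [apply pow_lt; lra| apply pow_incr; lra]. Qed.

Lemma poly_bounded_gauss G (E : Idx -> R) (alpha : R) : poly_bounded G ->
  (forall i, Dom i -> 0 <= E i <= exp (- alpha * snorm n (iA i) (iB i) (iC i) (xi i) (yi i))) ->
  exists m K, 0 <= K /\ forall i, Dom i ->
    Rabs (G i * E i) <= K * (1 + snorm n (iA i) (iB i) (iC i) (xi i) (yi i)) ^ m *
       exp (- alpha * snorm n (iA i) (iB i) (iC i) (xi i) (yi i)).
Proof. intros [m [K [HK B]]] HE. exists m, K. split; auto. intros i Di. rewrite Rabs_mult.
  specialize (HE i Di). rewrite (Rabs_pos_eq (E i)) by lra. apply Rmult_le_compat; try lra; try apply Rabs_pos.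
  apply B; auto. Qed.
End PolyBounds.

Ltac poly_bounded_atom :=
  first [ assumption | apply poly_bounded_pnum; solve [auto] | apply poly_bounded_qre; solve [auto] | apply poly_bounded_qim; solve [auto] | apply poly_bounded_snorm; solve [auto]
        | apply poly_bounded_pnum_dx; solve [auto] | apply poly_bounded_qim_dx; solve [auto] | apply poly_bounded_qform; solve [auto]
        | apply poly_bounded_inv_pow; solve [auto] | apply poly_bounded_cos | apply poly_bounded_sin | apply poly_bounded_const ].
Ltac poly_bounded_tac :=
  first [ poly_bounded_atom
        | apply poly_bounded_plus; poly_bounded_tac | apply poly_bounded_minus; poly_bounded_tac | apply poly_bounded_opp; poly_bounded_tac | apply poly_bounded_mult; poly_bounded_tac ].

Lemma summable_plus M1 M2 : summable M1 -> summable M2 -> summable (fun k1 k2 k3 => M1 k1 k2 k3 + M2 k1 k2 k3).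
Proof. intros [H1 [B1 HB1]] [H2 [B2 HB2]]. split.
  - intros; specialize (H1 k1 k2 k3); specialize (H2 k1 k2 k3); lra.
  - exists (B1 + B2). intros n0. rewrite (rbox_ext _ (fun k1 k2 k3 => 1 * M1 k1 k2 k3 + 1 * M2 k1 k2 k3)) by (intros; ring).
    rewrite rbox_lin. specialize (HB1 n0); specialize (HB2 n0). lra. Qed.

Lemma lattice_majorant (N D a b c : Z) (xs ys : R -> R) (DomS : R -> Prop) (X y1 y2 alpha : R) (F : Idx -> R) :
  (1 <= N)%Z -> D <> 0%Z -> 0 < y1 -> 0 < alpha ->
  (forall s, DomS s -> Rabs (xs s) <= X /\ y1 <= ys s <= y2) ->
  (exists m K, 0 <= K /\ forall i, DomS (iS i) ->
      Rabs (F i) <= K * (1 + snorm (IZR N) (iA i) (iB i) (iC i) (xs (iS i)) (ys (iS i))) ^ m *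
        exp (- alpha * snorm (IZR N) (iA i) (iB i) (iC i) (xs (iS i)) (ys (iS i)))) ->
  exists M, summable M /\ forall k1 k2 k3 s, DomS s ->
    Rabs (F (IZR (a + D * k1), IZR (b + 2 * N * D * k2), IZR (c + D * k3), s)) <= M k1 k2 k3.
Proof.
  intros HN HD Hy1 Ha Hxy [m [K [HK HF]]].
  assert (Hn : 0 < IZR N) by (apply (IZR_lt 0); lia).
  set (kC := / (2 * IZR N ^ 2 * y1 ^ 4)).
  set (kB := 8 * IZR N ^ 2 * X ^ 2 * kC + 2 / y1 ^ 2).
  set (kA := 3 + 3 * IZR N ^ 2 * (X ^ 2 + y2 ^ 2) ^ 2 * kC + 3 * X ^ 2 * kB).
  assert (HkC : 0 < kC) by (unfold kC; apply Rinv_0_lt_compat; apply Rmult_lt_0_compat; [apply Rmult_lt_0_compat; [lra|apply pow_lt; lra]| apply pow_lt; lra]).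
  assert (HkB : 0 <= kB). { unfold kB. assert (0 <= 8 * IZR N ^ 2 * X ^ 2) by (apply Rmult_le_pos; [apply Rmult_le_pos; [lra|apply pow2_ge_0]|apply pow2_ge_0]).
    assert (0 < 2 / y1 ^ 2) by (apply Rdiv_lt_0_compat; [lra|apply pow_lt; lra]).
    assert (0 <= 8 * IZR N ^ 2 * X ^ 2 * kC) by (apply Rmult_le_pos; lra). lra. }
  assert (HkA : 0 <= kA). { unfold kA. assert (0 <= 3 * IZR N ^ 2 * (X ^ 2 + y2 ^ 2) ^ 2) by (apply Rmult_le_pos; [apply Rmult_le_pos; [lra|apply pow2_ge_0]|apply pow2_ge_0]).
    assert (0 <= 3 * X ^ 2) by (apply Rmult_le_pos; [lra|apply pow2_ge_0]).
    assert (0 <= 3 * IZR N ^ 2 * (X ^ 2 + y2 ^ 2) ^ 2 * kC) by (apply Rmult_le_pos; lra).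
    assert (0 <= 3 * X ^ 2 * kB) by (apply Rmult_le_pos; lra). lra. }
  set (eps := / (kA + kB + kC)).
  assert (Heps : 0 < eps) by (unfold eps; apply Rinv_0_lt_compat; lra).
  destruct (summable_poly_gauss_majorant a b c D N eps alpha K m HD HN Heps Ha HK) as [M [HM HMb]].
  exists M. split; auto. intros k1 k2 k3 s Ds.
  specialize (HF (IZR (a + D * k1), IZR (b + 2 * N * D * k2), IZR (c + D * k3), s) Ds).
  unfold iA, iB, iC, iS in HF; cbn [fst snd] in HF.
  eapply Rle_trans; [exact HF|]. apply HMb. apply snorm_ge0.
  destruct (Hxy s Ds) as [Hx Hy].
  pose proof (coeffs_bound_by_snorm (IZR N) (IZR (a + D * k1)) (IZR (b + 2 * N * D * k2)) (IZR (c + D * k3)) (xs s) (ys s) X y1 y2 Hn Hy1 Hy Hx) as HS.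
  cbv zeta in HS. fold kC kB kA in HS.
  unfold eps. apply Rmult_le_reg_l with (kA + kB + kC); [lra|]. rewrite <- Rmult_assoc, Rinv_r by lra. lra.
Qed.

Lemma gauss_poly_bound n y1 (xs ys : R -> R) (DomS : R -> Prop) alpha (F G E : Idx -> R) :
  0 < n -> 0 < y1 -> (forall s, DomS s -> y1 <= ys s) ->
  (forall i, DomS (iS i) -> F i = G i * E i) ->
  (forall i, DomS (iS i) -> 0 <= E i <= exp (- alpha * snorm n (iA i) (iB i) (iC i) (xs (iS i)) (ys (iS i)))) ->
  poly_bounded n (fun i => xs (iS i)) (fun i => ys (iS i)) (fun i => DomS (iS i)) G ->
  exists m K, 0 <= K /\ forall i, DomS (iS i) ->
    Rabs (F i) <= K * (1 + snorm n (iA i) (iB i) (iC i) (xs (iS i)) (ys (iS i))) ^ m *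
        exp (- alpha * snorm n (iA i) (iB i) (iC i) (xs (iS i)) (ys (iS i))).
Proof. intros Hn Hy1 Hy HFe HE HG.
  destruct (poly_bounded_gauss n (fun i => xs (iS i)) (fun i => ys (iS i)) (fun i => DomS (iS i)) G E alpha HG HE) as [m [K [HK B]]].
  exists m, K. split; auto. intros i Di. rewrite HFe by auto. apply B; auto. Qed.

Lemma gauss_factor_bound n d A B Cc x y v vmin ymax : 0 < n -> 0 < d -> 0 < vmin -> vmin <= v -> 0 < y <= ymax ->
  0 <= exp (- 2 * PI * v * decay n A B Cc x y / d) <=
  exp (- (2 * PI * vmin / (4 * n * ymax ^ 2 * d)) * snorm n A B Cc x y).
Proof. intros Hn Hd Hv Hvv Hy. split; [left; apply exp_pos|]. apply exp_le.
  pose proof (snorm_ge0 n A B Cc x y). pose proof PI_RGT_0. unfold decay.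
  set (S := snorm n A B Cc x y) in *.
  assert (y ^ 2 <= ymax ^ 2) by (apply pow_incr; lra).
  assert (0 < y ^ 2) by (apply pow_lt; lra).
  assert (vmin / (4 * n * ymax ^ 2 * d) <= v / (4 * n * y ^ 2 * d)).
  { unfold Rdiv. apply Rmult_le_compat; try lra. left; apply Rinv_0_lt_compat.
    apply Rmult_lt_0_compat; [|lra]. apply Rmult_lt_0_compat; [lra|]. lra.
    apply Rinv_le_contravar. apply Rmult_lt_0_compat; [|lra]. apply Rmult_lt_0_compat; [lra|]. lra.
    apply Rmult_le_compat_r; [lra|]. apply Rmult_le_compat_l; lra. }
  replace (- 2 * PI * v * (S / (4 * n * y ^ 2)) / d) with (- (2 * PI) * (v / (4 * n * y ^ 2 * d)) * S) by (field; repeat split; lra).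
  replace (- (2 * PI * vmin / (4 * n * ymax ^ 2 * d)) * S) with (- (2 * PI) * (vmin / (4 * n * ymax ^ 2 * d)) * S) by (field; repeat split; try lra; nra).
  assert (0 <= (v / (4 * n * y ^ 2 * d) - vmin / (4 * n * ymax ^ 2 * d)) * S) by (apply Rmult_le_pos; lra).
  assert (0 <= 2 * PI * ((v / (4 * n * y ^ 2 * d) - vmin / (4 * n * ymax ^ 2 * d)) * S)) by (apply Rmult_le_pos; lra).
  lra.
Qed.

Lemma majorant4 (DomS : R -> Prop) (F1 F2 F3 F4 : Z -> Z -> Z -> R -> R) :
  (exists M, summable M /\ forall k1 k2 k3 s, DomS s -> Rabs (F1 k1 k2 k3 s) <= M k1 k2 k3) ->
  (exists M, summable M /\ forall k1 k2 k3 s, DomS s -> Rabs (F2 k1 k2 k3 s) <= M k1 k2 k3) ->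
  (exists M, summable M /\ forall k1 k2 k3 s, DomS s -> Rabs (F3 k1 k2 k3 s) <= M k1 k2 k3) ->
  (exists M, summable M /\ forall k1 k2 k3 s, DomS s -> Rabs (F4 k1 k2 k3 s) <= M k1 k2 k3) ->
  exists M, summable M /\ forall k1 k2 k3 s, DomS s ->
    Rabs (F1 k1 k2 k3 s) <= M k1 k2 k3 /\ Rabs (F2 k1 k2 k3 s) <= M k1 k2 k3 /\
    Rabs (F3 k1 k2 k3 s) <= M k1 k2 k3 /\ Rabs (F4 k1 k2 k3 s) <= M k1 k2 k3.
Proof.
  intros [M1 [S1 B1]] [M2 [S2 B2]] [M3 [S3 B3]] [M4 [S4 B4]].
  exists (fun k1 k2 k3 => M1 k1 k2 k3 + M2 k1 k2 k3 + (M3 k1 k2 k3 + M4 k1 k2 k3)).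
  split. { apply (summable_plus (fun k1 k2 k3 => M1 k1 k2 k3 + M2 k1 k2 k3)); apply summable_plus; auto. }
  intros k1 k2 k3 s Ds. destruct S1 as [P1 _], S2 as [P2 _], S3 as [P3 _], S4 as [P4 _].
  specialize (P1 k1 k2 k3); specialize (P2 k1 k2 k3); specialize (P3 k1 k2 k3); specialize (P4 k1 k2 k3).
  specialize (B1 k1 k2 k3 s Ds); specialize (B2 k1 k2 k3 s Ds); specialize (B3 k1 k2 k3 s Ds); specialize (B4 k1 k2 k3 s Ds).
  repeat split; lra.
Qed.

Ltac lattice_majorant_tac N D a b c xs ys DomS X y1 y2 al F :=
  let H := fresh in
  pose proof (lattice_majorant N D a b c xs ys DomS X y1 y2 al F) as H;
  unfold iA, iB, iC, iS in H; cbn [fst snd] in H; apply H; clear H.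

Lemma poly_bounded_inv_scaled_pow n y1 xi yi (Dom : Idx -> Prop) c k : 0 < c -> 0 < y1 -> (forall i, Dom i -> y1 <= yi i) ->
  poly_bounded n xi yi Dom (fun i => / (c * yi i ^ k)).
Proof. intros Hc Hy1 Hyy. apply (poly_bounded_cst _ _ _ _ (/ (c * y1 ^ k))). intros i Di. pose proof (Hyy i Di).
  assert (0 < y1 ^ k) by (apply pow_lt; lra).
  rewrite Rabs_pos_eq by (left; apply Rinv_0_lt_compat, Rmult_lt_0_compat; [lra| apply pow_lt; lra]).
  apply Rinv_le_contravar; [apply Rmult_lt_0_compat; lra|]. apply Rmult_le_compat_l; [lra|]. apply pow_incr; lra. Qed.

Lemma gauss_rate_pos n d v y : 0 < n -> 0 < d -> 0 < v -> 0 < y -> 0 < 2 * PI * v / (4 * n * y ^ 2 * d).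
Proof.
  intros Hn Hd Hv Hy. pose proof PI_RGT_0. apply Rdiv_lt_0_compat; [nra|].
  apply Rmult_lt_0_compat; [|lra]. apply Rmult_lt_0_compat; [lra|apply pow_lt; lra].
Qed.

Section PhiU.
Variables (N D a b c : Z) (x0 y0 v0 : R).
Hypotheses (HN : (1 <= N)%Z) (HD : D <> 0%Z) (Hy0 : 0 < y0) (Hv0 : 0 < v0).
Let n := IZR N.
Let d := IZR (Z.abs D).
Let xs := fun _ : R => x0.
Let ys := fun _ : R => y0.
Let al := 2 * PI * v0 / (4 * n * y0 ^ 2 * d).
Let Hn : 0 < n. Proof. apply (IZR_lt 0); lia. Qed.
Let Hd : 0 < d. Proof. apply (IZR_lt 0); lia. Qed.
Let Hal : 0 < al. Proof. apply gauss_rate_pos; auto; lra. Qed.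

Ltac gauss_poly_tac G := apply (gauss_poly_bound n y0 xs ys (fun _ => True) al _ G
     (fun i => exp (- 2 * PI * v0 * decay n (iA i) (iB i) (iC i) x0 y0 / d))); auto; try (intros; unfold ys; lra);
     [ intros i _; unfold iA, iB, iC, iS; simpl; ring
     | intros i _; unfold al, xs, ys; apply (gauss_factor_bound n d _ _ _ x0 y0 v0 v0 y0); auto; lra
     | let HY := fresh in assert (HY : forall i : Idx, True -> y0 <= ys (iS i)) by (intros; unfold ys; lra);
       pose proof (poly_bounded_qform n y0 (fun i => xs (iS i)) (fun i => ys (iS i)) (fun _ => True) Hn Hy0 HY);
       unfold pzv, phase, Rdiv; poly_bounded_tac ].

Lemma majorant_phi_u : exists M, summable M /\ forall k1 k2 k3 s, True ->
  let A := IZR (a + D * k1) in let B := IZR (b + 2 * N * D * k2) in let C := IZR (c + D * k3) in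
    Rabs (Re (phi_term n d A B C x0 y0 s v0)) <= M k1 k2 k3 /\ Rabs (Im (phi_term n d A B C x0 y0 s v0)) <= M k1 k2 k3 /\
    Rabs (Re (phi_term_du n d A B C x0 y0 s v0)) <= M k1 k2 k3 /\ Rabs (Im (phi_term_du n d A B C x0 y0 s v0)) <= M k1 k2 k3.
Proof.
  apply majorant4.
  - lattice_majorant_tac N D a b c xs ys (fun _ : R => True) (Rabs x0) y0 y0 al (fun i => Re (phi_term n d (iA i) (iB i) (iC i) x0 y0 (iS i) v0)); auto.
    intros; unfold xs, ys; lra.
    gauss_poly_tac (fun i => v0 * pzv n (iA i) (iB i) (iC i) x0 y0 * cos (phase n d (iA i) (iB i) (iC i) * iS i)).
  - lattice_majorant_tac N D a b c xs ys (fun _ : R => True) (Rabs x0) y0 y0 al (fun i => Im (phi_term n d (iA i) (iB i) (iC i) x0 y0 (iS i) v0)); auto.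
    intros; unfold xs, ys; lra.
    gauss_poly_tac (fun i => v0 * pzv n (iA i) (iB i) (iC i) x0 y0 * sin (phase n d (iA i) (iB i) (iC i) * iS i)).
  - lattice_majorant_tac N D a b c xs ys (fun _ : R => True) (Rabs x0) y0 y0 al (fun i => Re (phi_term_du n d (iA i) (iB i) (iC i) x0 y0 (iS i) v0)); auto.
    intros; unfold xs, ys; lra.
    gauss_poly_tac (fun i => - (v0 * pzv n (iA i) (iB i) (iC i) x0 y0 * phase n d (iA i) (iB i) (iC i) * sin (phase n d (iA i) (iB i) (iC i) * iS i))).
  - lattice_majorant_tac N D a b c xs ys (fun _ : R => True) (Rabs x0) y0 y0 al (fun i => Im (phi_term_du n d (iA i) (iB i) (iC i) x0 y0 (iS i) v0)); auto.
    intros; unfold xs, ys; lra.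
    gauss_poly_tac (fun i => v0 * pzv n (iA i) (iB i) (iC i) x0 y0 * phase n d (iA i) (iB i) (iC i) * cos (phase n d (iA i) (iB i) (iC i) * iS i)).
Qed.
End PhiU.

Section PhiV.
Variables (N D a b c : Z) (x0 y0 u0 v0 : R).
Hypotheses (HN : (1 <= N)%Z) (HD : D <> 0%Z) (Hy0 : 0 < y0) (Hv0 : 0 < v0).
Let n := IZR N.
Let d := IZR (Z.abs D).
Let xs := fun _ : R => x0.
Let ys := fun _ : R => y0.
Let DomS := fun s => v0 - v0 / 2 < s < v0 + v0 / 2.
Let al := 2 * PI * (v0 / 2) / (4 * n * y0 ^ 2 * d).
Let Hn : 0 < n. Proof. apply (IZR_lt 0); lia. Qed.
Let Hd : 0 < d. Proof. apply (IZR_lt 0); lia. Qed.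
Let Hal : 0 < al. Proof. apply gauss_rate_pos; auto; lra. Qed.

Ltac gauss_poly_tac G := apply (gauss_poly_bound n y0 xs ys DomS al _ G
     (fun i => exp (- 2 * PI * iS i * decay n (iA i) (iB i) (iC i) x0 y0 / d))); auto; try (intros; unfold ys; lra);
     [ intros i _; unfold iA, iB, iC, iS; simpl; ring
     | intros i Di; unfold al, xs, ys; unfold DomS in Di; apply (gauss_factor_bound n d _ _ _ x0 y0 (iS i) (v0 / 2) y0); auto; lra
     | let HY := fresh in assert (HY : forall i : Idx, DomS (iS i) -> y0 <= ys (iS i)) by (intros; unfold ys; lra);
       pose proof (poly_bounded_qform n y0 (fun i => xs (iS i)) (fun i => ys (iS i)) (fun i => DomS (iS i)) Hn Hy0 HY);
       let HS := fresh in assert (HS : poly_bounded n (fun i => xs (iS i)) (fun i => ys (iS i)) (fun i => DomS (iS i)) (fun i => iS i))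
         by (apply (poly_bounded_cst _ _ _ _ (v0 + v0 / 2)); intros i Di; unfold DomS in Di; apply Rabs_le; lra);
       unfold pzv, phase, decay, Rdiv; poly_bounded_tac ].

Lemma majorant_phi_v : exists M, summable M /\ forall k1 k2 k3 s, DomS s ->
  let A := IZR (a + D * k1) in let B := IZR (b + 2 * N * D * k2) in let C := IZR (c + D * k3) in
    Rabs (Re (phi_term n d A B C x0 y0 u0 s)) <= M k1 k2 k3 /\ Rabs (Im (phi_term n d A B C x0 y0 u0 s)) <= M k1 k2 k3 /\
    Rabs (Re (phi_term_dv n d A B C x0 y0 u0 s)) <= M k1 k2 k3 /\ Rabs (Im (phi_term_dv n d A B C x0 y0 u0 s)) <= M k1 k2 k3.
Proof.
  apply majorant4.
  - lattice_majorant_tac N D a b c xs ys DomS (Rabs x0) y0 y0 al (fun i => Re (phi_term n d (iA i) (iB i) (iC i) x0 y0 u0 (iS i))); auto.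
    intros; unfold xs, ys; lra.
    gauss_poly_tac (fun i => iS i * pzv n (iA i) (iB i) (iC i) x0 y0 * cos (phase n d (iA i) (iB i) (iC i) * u0)).
  - lattice_majorant_tac N D a b c xs ys DomS (Rabs x0) y0 y0 al (fun i => Im (phi_term n d (iA i) (iB i) (iC i) x0 y0 u0 (iS i))); auto.
    intros; unfold xs, ys; lra.
    gauss_poly_tac (fun i => iS i * pzv n (iA i) (iB i) (iC i) x0 y0 * sin (phase n d (iA i) (iB i) (iC i) * u0)).
  - lattice_majorant_tac N D a b c xs ys DomS (Rabs x0) y0 y0 al (fun i => Re (phi_term_dv n d (iA i) (iB i) (iC i) x0 y0 u0 (iS i))); auto.
    intros; unfold xs, ys; lra.
    gauss_poly_tac (fun i => pzv n (iA i) (iB i) (iC i) x0 y0 * (1 - 2 * PI * iS i * decay n (iA i) (iB i) (iC i) x0 y0 / d) * cos (phase n d (iA i) (iB i) (iC i) * u0)).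
  - lattice_majorant_tac N D a b c xs ys DomS (Rabs x0) y0 y0 al (fun i => Im (phi_term_dv n d (iA i) (iB i) (iC i) x0 y0 u0 (iS i))); auto.
    intros; unfold xs, ys; lra.
    gauss_poly_tac (fun i => pzv n (iA i) (iB i) (iC i) x0 y0 * (1 - 2 * PI * iS i * decay n (iA i) (iB i) (iC i) x0 y0 / d) * sin (phase n d (iA i) (iB i) (iC i) * u0)).
Qed.
End PhiV.

Section PhiShX.
Variables (N D a b c : Z) (x0 y0 u0 v0 : R).
Hypotheses (HN : (1 <= N)%Z) (HD : D <> 0%Z) (Hy0 : 0 < y0) (Hv0 : 0 < v0).
Let n := IZR N.
Let d := IZR (Z.abs D).
Let xs := fun s : R => s.
Let ys := fun _ : R => y0.
Let DomS := fun s => x0 - 1 < s < x0 + 1.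
Let al := 2 * PI * v0 / (4 * n * y0 ^ 2 * d).
Let Hn : 0 < n. Proof. apply (IZR_lt 0); lia. Qed.
Let Hd : 0 < d. Proof. apply (IZR_lt 0); lia. Qed.
Let Hal : 0 < al. Proof. apply gauss_rate_pos; auto; lra. Qed.

Ltac gauss_poly_tac G := apply (gauss_poly_bound n y0 xs ys DomS al _ G
     (fun i => gauss_factor n d (iA i) (iB i) (iC i) v0 (iS i) y0)); auto; try (intros; unfold ys; lra);
     [ intros i _; unfold iA, iB, iC, iS; simpl; unfold gauss_factor; ring
     | intros i Di; unfold al, xs, ys, gauss_factor; apply (gauss_factor_bound n d _ _ _ (iS i) y0 v0 v0 y0); auto; lra
     | let HY := fresh in assert (HY : forall i : Idx, DomS (iS i) -> y0 <= ys (iS i)) by (intros; unfold ys; lra);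
       pose proof (poly_bounded_qform n y0 (fun i => xs (iS i)) (fun i => ys (iS i)) (fun i => DomS (iS i)) Hn Hy0 HY);
       pose proof (poly_bounded_pnum_dx n y0 (fun i => xs (iS i)) (fun i => ys (iS i)) (fun i => DomS (iS i)) Hy0 HY);
       pose proof (poly_bounded_qim_dx n y0 (fun i => xs (iS i)) (fun i => ys (iS i)) (fun i => DomS (iS i)) Hn Hy0 HY);
       unfold sh_coef, sh_re, sh_im, sh_re_dx, sh_im_dx, decay_dx, phase, Rdiv; poly_bounded_tac ].

Lemma majorant_phiSh_x : exists M, summable M /\ forall k1 k2 k3 s, DomS s ->
  let A := IZR (a + D * k1) in let B := IZR (b + 2 * N * D * k2) in let C := IZR (c + D * k3) in
    Rabs (Re (phiSh_term n d A B C s y0 u0 v0)) <= M k1 k2 k3 /\ Rabs (Im (phiSh_term n d A B C s y0 u0 v0)) <= M k1 k2 k3 /\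
    Rabs (Re (phiSh_term_dx n d A B C s y0 u0 v0)) <= M k1 k2 k3 /\ Rabs (Im (phiSh_term_dx n d A B C s y0 u0 v0)) <= M k1 k2 k3.
Proof.
  assert (HX : forall s, DomS s -> Rabs (xs s) <= Rabs x0 + 1 /\ y0 <= ys s <= y0).
  { intros s Ds. unfold DomS, xs, ys in *. split; [|lra]. unfold Rabs at 1 2; destruct (Rcase_abs s); destruct (Rcase_abs x0); lra. }
  apply majorant4.
  - lattice_majorant_tac N D a b c xs ys DomS (Rabs x0 + 1) y0 y0 al (fun i => Re (phiSh_term n d (iA i) (iB i) (iC i) (iS i) y0 u0 v0)); auto.
    gauss_poly_tac (fun i => - sqrt v0 / (4 * n * y0 ^ 2) * (qre n (iA i) (iB i) (iC i) (iS i) y0 * cos (phase n d (iA i) (iB i) (iC i) * u0)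
       + qim n (iA i) (iB i) (iC i) (iS i) y0 * sin (phase n d (iA i) (iB i) (iC i) * u0))).
  - lattice_majorant_tac N D a b c xs ys DomS (Rabs x0 + 1) y0 y0 al (fun i => Im (phiSh_term n d (iA i) (iB i) (iC i) (iS i) y0 u0 v0)); auto.
    gauss_poly_tac (fun i => - sqrt v0 / (4 * n * y0 ^ 2) * (qim n (iA i) (iB i) (iC i) (iS i) y0 * cos (phase n d (iA i) (iB i) (iC i) * u0)
       - qre n (iA i) (iB i) (iC i) (iS i) y0 * sin (phase n d (iA i) (iB i) (iC i) * u0))).
  - lattice_majorant_tac N D a b c xs ys DomS (Rabs x0 + 1) y0 y0 al (fun i => Re (phiSh_term_dx n d (iA i) (iB i) (iC i) (iS i) y0 u0 v0)); auto.
    gauss_poly_tac (fun i => sh_coef n v0 y0 * (sh_re_dx n d (iA i) (iB i) (iC i) u0 (iS i) y0 - 2 * PI * v0 / d * decay_dx n (iA i) (iB i) (iC i) (iS i) y0 * sh_re n d (iA i) (iB i) (iC i) u0 (iS i) y0)).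
  - lattice_majorant_tac N D a b c xs ys DomS (Rabs x0 + 1) y0 y0 al (fun i => Im (phiSh_term_dx n d (iA i) (iB i) (iC i) (iS i) y0 u0 v0)); auto.
    gauss_poly_tac (fun i => sh_coef n v0 y0 * (sh_im_dx n d (iA i) (iB i) (iC i) u0 (iS i) y0 - 2 * PI * v0 / d * decay_dx n (iA i) (iB i) (iC i) (iS i) y0 * sh_im n d (iA i) (iB i) (iC i) u0 (iS i) y0)).
Qed.
End PhiShX.

Section PhiShY.
Variables (N D a b c : Z) (x0 y0 u0 v0 : R).
Hypotheses (HN : (1 <= N)%Z) (HD : D <> 0%Z) (Hy0 : 0 < y0) (Hv0 : 0 < v0).
Let n := IZR N.
Let d := IZR (Z.abs D).
Let xs := fun _ : R => x0.
Let ys := fun s : R => s.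
Let DomS := fun s => y0 - y0 / 2 < s < y0 + y0 / 2.
Let al := 2 * PI * v0 / (4 * n * (y0 + y0 / 2) ^ 2 * d).
Let Hn : 0 < n. Proof. apply (IZR_lt 0); lia. Qed.
Let Hd : 0 < d. Proof. apply (IZR_lt 0); lia. Qed.
Let Hal : 0 < al. Proof. apply gauss_rate_pos; auto; lra. Qed.

Ltac gauss_poly_tac G := apply (gauss_poly_bound n (y0 / 2) xs ys DomS al _ G
     (fun i => gauss_factor n d (iA i) (iB i) (iC i) v0 x0 (iS i))); auto; try (intros s Ds; unfold DomS in Ds; unfold ys; lra);
     [ intros i _; unfold iA, iB, iC, iS; simpl; unfold gauss_factor; ring
     | intros i Di; unfold al, xs, ys, gauss_factor; unfold DomS in Di; apply (gauss_factor_bound n d _ _ _ x0 (iS i) v0 v0 (y0 + y0 / 2)); auto; lra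
     | let HY := fresh in assert (HY : forall i : Idx, DomS (iS i) -> y0 / 2 <= ys (iS i)) by (intros i Di; unfold DomS in Di; unfold ys; lra);
       let Hy2 := fresh in assert (Hy2 : 0 < y0 / 2) by lra;
       pose proof (poly_bounded_qform n (y0 / 2) (fun i => xs (iS i)) (fun i => ys (iS i)) (fun i => DomS (iS i)) Hn Hy2 HY);
       pose proof (poly_bounded_pnum_dx n (y0 / 2) (fun i => xs (iS i)) (fun i => ys (iS i)) (fun i => DomS (iS i)) Hy2 HY);
       pose proof (poly_bounded_qim_dx n (y0 / 2) (fun i => xs (iS i)) (fun i => ys (iS i)) (fun i => DomS (iS i)) Hn Hy2 HY);
       pose proof (poly_bounded_inv_scaled_pow n (y0 / 2) (fun i => xs (iS i)) (fun i => ys (iS i)) (fun i => DomS (iS i)) (4 * n) 2 ltac:(lra) Hy2 HY);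
       pose proof (poly_bounded_inv_scaled_pow n (y0 / 2) (fun i => xs (iS i)) (fun i => ys (iS i)) (fun i => DomS (iS i)) (4 * n) 3 ltac:(lra) Hy2 HY);
       pose proof (poly_bounded_inv_scaled_pow n (y0 / 2) (fun i => xs (iS i)) (fun i => ys (iS i)) (fun i => DomS (iS i)) (2 * n) 3 ltac:(lra) Hy2 HY);
       unfold sh_coef, sh_coef_dy, sh_re, sh_im, sh_re_dy, sh_im_dy, decay_dy, phase, Rdiv; poly_bounded_tac ].

Lemma majorant_phiSh_y : exists M, summable M /\ forall k1 k2 k3 s, DomS s ->
  let A := IZR (a + D * k1) in let B := IZR (b + 2 * N * D * k2) in let C := IZR (c + D * k3) in
    Rabs (Re (phiSh_term n d A B C x0 s u0 v0)) <= M k1 k2 k3 /\ Rabs (Im (phiSh_term n d A B C x0 s u0 v0)) <= M k1 k2 k3 /\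
    Rabs (Re (phiSh_term_dy n d A B C x0 s u0 v0)) <= M k1 k2 k3 /\ Rabs (Im (phiSh_term_dy n d A B C x0 s u0 v0)) <= M k1 k2 k3.
Proof.
  assert (HX : forall s, DomS s -> Rabs (xs s) <= Rabs x0 /\ y0 / 2 <= ys s <= y0 + y0 / 2).
  { intros s Ds. unfold DomS, xs, ys in *. split; lra. }
  assert (Hy2 : 0 < y0 / 2) by lra.
  apply majorant4.
  - lattice_majorant_tac N D a b c xs ys DomS (Rabs x0) (y0 / 2) (y0 + y0 / 2) al (fun i => Re (phiSh_term n d (iA i) (iB i) (iC i) x0 (iS i) u0 v0)); auto.
    gauss_poly_tac (fun i => - sqrt v0 / (4 * n * iS i ^ 2) * (qre n (iA i) (iB i) (iC i) x0 (iS i) * cos (phase n d (iA i) (iB i) (iC i) * u0)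
       + qim n (iA i) (iB i) (iC i) x0 (iS i) * sin (phase n d (iA i) (iB i) (iC i) * u0))).
  - lattice_majorant_tac N D a b c xs ys DomS (Rabs x0) (y0 / 2) (y0 + y0 / 2) al (fun i => Im (phiSh_term n d (iA i) (iB i) (iC i) x0 (iS i) u0 v0)); auto.
    gauss_poly_tac (fun i => - sqrt v0 / (4 * n * iS i ^ 2) * (qim n (iA i) (iB i) (iC i) x0 (iS i) * cos (phase n d (iA i) (iB i) (iC i) * u0)
       - qre n (iA i) (iB i) (iC i) x0 (iS i) * sin (phase n d (iA i) (iB i) (iC i) * u0))).
  - lattice_majorant_tac N D a b c xs ys DomS (Rabs x0) (y0 / 2) (y0 + y0 / 2) al (fun i => Re (phiSh_term_dy n d (iA i) (iB i) (iC i) x0 (iS i) u0 v0)); auto.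
    gauss_poly_tac (fun i => sh_coef_dy n v0 (iS i) * sh_re n d (iA i) (iB i) (iC i) u0 x0 (iS i) + sh_coef n v0 (iS i) * (sh_re_dy n d (iA i) (iB i) (iC i) u0 x0 (iS i) - 2 * PI * v0 / d * decay_dy n (iA i) (iB i) (iC i) x0 (iS i) * sh_re n d (iA i) (iB i) (iC i) u0 x0 (iS i))).
  - lattice_majorant_tac N D a b c xs ys DomS (Rabs x0) (y0 / 2) (y0 + y0 / 2) al (fun i => Im (phiSh_term_dy n d (iA i) (iB i) (iC i) x0 (iS i) u0 v0)); auto.
    gauss_poly_tac (fun i => sh_coef_dy n v0 (iS i) * sh_im n d (iA i) (iB i) (iC i) u0 x0 (iS i) + sh_coef n v0 (iS i) * (sh_im_dy n d (iA i) (iB i) (iC i) u0 x0 (iS i) - 2 * PI * v0 / d * decay_dy n (iA i) (iB i) (iC i) x0 (iS i) * sh_im n d (iA i) (iB i) (iC i) u0 x0 (iS i))).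
Qed.
End PhiShY.

Lemma xi_term_eq_dz_term n d A B Cc x0 y0 u0 v0 : 0 < n -> 0 < d -> 0 < y0 -> 0 < v0 ->
  (- 2 * Ci * RtoC (sqrt v0) * Cconj (/ 2 * (phi_term_du n d A B Cc x0 y0 u0 v0 + Ci * phi_term_dv n d A B Cc x0 y0 u0 v0)))%C =
  (4 * Ci * RtoC (sqrt n) * RtoC (y0 ^ 2) * (/ 2 * (phiSh_term_dx n d A B Cc x0 y0 u0 v0 - Ci * phiSh_term_dy n d A B Cc x0 y0 u0 v0)))%C.
Proof.
  intros Hn Hd Hy Hv.
  unfold phi_term_du, phi_term_dv, phiSh_term_dx, phiSh_term_dy, sh_coef, sh_coef_dy, gauss_factor, sh_re, sh_im, sh_re_dx, sh_im_dx, sh_re_dy, sh_im_dy, decay_dx, decay_dy, pnum_dx, qim_dx, pzv.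
  set (E := exp (- 2 * PI * v0 * decay n A B Cc x0 y0 / d)).
  set (cs := cos (phase n d A B Cc * u0)). set (sn := sin (phase n d A B Cc * u0)).
  unfold phase, decay, snorm, qform, pnum, qre, qim.
  clearbody E cs sn.
  assert (Hr : 0 < sqrt n) by (apply sqrt_lt_R0; auto).
  assert (Hnr : n = sqrt n * sqrt n) by (rewrite sqrt_sqrt; lra).
  set (r := sqrt n) in *. clearbody r. subst n.
  unfold Cconj, Cmult, Cplus, Cminus, Copp, Cinv, RtoC, Ci; simpl.
  apply f_equal2; field; repeat split; lra.
Qed.

Ltac ceq := apply injective_projections; simpl; (ring || (field; repeat split; lra)).

Definition delta_sum (N D : Z) (V : Z -> Z -> Z -> C) : C :=
  let AD := Z.to_nat (Z.abs D) in
  csum (zrange 0 AD) (fun a =>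
  csum (zrange 0 (Z.to_nat (2 * N) * AD)) (fun b =>
  csum (zrange 0 AD) (fun c => V a b c))).

Definition delta_cond (N D r h a b c : Z) : Prop :=
  (2 * N | b - r * h)%Z /\
  exists k : Z, (QD N D (lamL' N a b c) - IZR (Z.sgn D) * (- IZR (h * h) / (4 * IZR N)))%R = IZR k.

Definition delta_term (N D r h : Z) (g : Z -> Z -> Z -> Z -> Z -> Z -> C) (a b c : Z) : C :=
  if excluded_middle_informative (delta_cond N D r h a b c)
  then (RtoC (IZR (chi N D a b c)) * lattice_sum (g a b c))%C else RtoC 0.

Lemma Theta_delta_sum N D r psi t w h :
  Theta N D r psi t w h = (RtoC (sqrt (Im t)) *
    delta_sum N D (delta_term N D r h (fun a b c k1 k2 k3 => psi (a + D * k1)%Z (b + 2 * N * D * k2)%Z (c + D * k3)%Z t w)))%C.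
Proof. reflexivity. Qed.

Lemma csum_ext {A} (l : list A) f g : (forall x, f x = g x) -> csum l f = csum l g.
Proof. intros H; induction l; simpl; auto. rewrite H, IHl; auto. Qed.

Lemma csum_lin {A} (l : list A) (p q : C) f g :
  (p * csum l f + q * csum l g)%C = csum l (fun x => p * f x + q * g x)%C.
Proof. induction l; simpl. ceq. rewrite <- IHl. ceq. Qed.

Lemma csum_conj {A} (l : list A) f : Cconj (csum l f) = csum l (fun x => Cconj (f x)).
Proof. induction l; simpl. ceq. rewrite <- IHl. ceq. Qed.

Lemma delta_sum_ext N D V W : (forall a b c, V a b c = W a b c) -> delta_sum N D V = delta_sum N D W.
Proof. intros H. unfold delta_sum. apply csum_ext; intros; apply csum_ext; intros; apply csum_ext; intros; auto. Qed.

Lemma delta_sum_lin N D (p q : C) V W : (p * delta_sum N D V + q * delta_sum N D W)%C = delta_sum N D (fun a b c => p * V a b c + q * W a b c)%C.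
Proof. unfold delta_sum. rewrite csum_lin. apply csum_ext; intros. rewrite csum_lin. apply csum_ext; intros.
  rewrite csum_lin. reflexivity. Qed.

Lemma delta_sum_scal N D (p : C) V : (p * delta_sum N D V)%C = delta_sum N D (fun a b c => p * V a b c)%C.
Proof. transitivity (p * delta_sum N D V + 0 * delta_sum N D V)%C. ceq. rewrite delta_sum_lin. apply delta_sum_ext; intros. ceq. Qed.

Lemma delta_sum_conj N D V : Cconj (delta_sum N D V) = delta_sum N D (fun a b c => Cconj (V a b c)).
Proof. unfold delta_sum. rewrite csum_conj. apply csum_ext; intros. rewrite csum_conj. apply csum_ext; intros.
  rewrite csum_conj. reflexivity. Qed.

Lemma cderiv_delta_sum N D (V : R -> Z -> Z -> Z -> C) V' s0 :
  (forall a b c, cderiv (fun s => V s a b c) s0 (V' a b c)) -> cderiv (fun s => delta_sum N D (V s)) s0 (delta_sum N D V').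
Proof. intros H. unfold delta_sum.
  apply (cderiv_csum _ (fun a s => csum _ (fun b => csum _ (fun c => V s a b c)))). intros a.
  apply (cderiv_csum _ (fun b s => csum _ (fun c => V s a b c))). intros b.
  apply (cderiv_csum _ (fun c s => V s a b c)). intros c. apply H.
Qed.

Lemma cderiv_delta_term N D r h (g : R -> Z -> Z -> Z -> Z -> Z -> Z -> C) L s0 a b c :
  cderiv (fun s => lattice_sum (g s a b c)) s0 (L a b c) ->
  cderiv (fun s => delta_term N D r h (g s) a b c) s0
    (if excluded_middle_informative (delta_cond N D r h a b c) then (RtoC (IZR (chi N D a b c)) * L a b c)%C else RtoC 0).
Proof. intros H. unfold delta_term. destruct (excluded_middle_informative _).
  - apply (cderiv_cmul _ (fun s => lattice_sum (g s a b c))); auto.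
  - apply cderiv_const.
Qed.

Lemma lattice_summable_conj f : lattice_summable f -> lattice_summable (fun k1 k2 k3 => Cconj (f k1 k2 k3)).
Proof. intros [H1 H2]. split.
  - destruct H1 as [l Hl]. exists l. eapply is_lim_seq_ext; [|exact Hl]. intros n. apply rbox_ext. intros; unfold reF; reflexivity.
  - destruct H2 as [l Hl]. exists (-1 * l). eapply is_lim_seq_ext; [|apply (is_lim_seq_scal_l (rbox (imF f)) (-1) (Finite l)); exact Hl].
    intros n. rewrite (rbox_ext (imF (fun k1 k2 k3 => Cconj (f k1 k2 k3))) (fun k1 k2 k3 => -1 * imF f k1 k2 k3))
      by (intros; unfold imF, Im; simpl; ring). rewrite rbox_scal. reflexivity.
Qed.

Lemma lattice_sum_scal (p : C) f : lattice_summable f ->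
  (p * lattice_sum f)%C = lattice_sum (fun k1 k2 k3 => p * f k1 k2 k3)%C.
Proof.
  intros Hf. transitivity (p * lattice_sum f + 0 * lattice_sum f)%C; [ceq|].
  rewrite <- (proj1 (lattice_sum_lin p 0 f f Hf Hf)). apply lattice_sum_ext; intros; ceq.
Qed.

Lemma lattice_sum_wirtinger (s : R) (K : C) fu fv fx fy :
  lattice_summable fu -> lattice_summable fv -> lattice_summable fx -> lattice_summable fy ->
  (forall k1 k2 k3, (- 2 * Ci * RtoC s * Cconj (/ 2 * (fu k1 k2 k3 + Ci * fv k1 k2 k3)))%C =
                    (K * (/ 2 * (fx k1 k2 k3 - Ci * fy k1 k2 k3)))%C) ->
  (- 2 * Ci * RtoC s * Cconj (/ 2 * (lattice_sum fu + Ci * lattice_sum fv)))%C =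
  (K * (/ 2 * (lattice_sum fx - Ci * lattice_sum fy)))%C.
Proof.
  intros Hu Hv Hx Hy Hterm.
  destruct (lattice_sum_lin (/ 2) (/ 2 * Ci) fu fv Hu Hv) as [Euv Huv].
  destruct (lattice_sum_lin (K * / 2) (- (K * / 2 * Ci)) fx fy Hx Hy) as [Exy _].
  transitivity ((- 2 * Ci * RtoC s) * Cconj (/ 2 * lattice_sum fu + / 2 * Ci * lattice_sum fv))%C; [ceq|].
  transitivity (K * / 2 * lattice_sum fx + - (K * / 2 * Ci) * lattice_sum fy)%C; [|ceq].
  rewrite <- Euv, <- Exy, lattice_sum_conj.
  rewrite lattice_sum_scal by (apply lattice_summable_conj; exact Huv).
  apply lattice_sum_ext; intros k1 k2 k3.
  transitivity (- 2 * Ci * RtoC s * Cconj (/ 2 * (fu k1 k2 k3 + Ci * fv k1 k2 k3)))%C; [ceq|].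
  rewrite Hterm; ceq.
Qed.

Lemma delta_sum_wirtinger N D (s : R) (K : C) U V X Y :
  (forall a b c, (- 2 * Ci * RtoC s * Cconj (/ 2 * (U a b c + Ci * V a b c)))%C =
                 (K * (/ 2 * (X a b c - Ci * Y a b c)))%C) ->
  (- 2 * Ci * RtoC s * Cconj (/ 2 * (delta_sum N D U + Ci * delta_sum N D V)))%C =
  (K * (/ 2 * (delta_sum N D X - Ci * delta_sum N D Y)))%C.
Proof.
  intros Hterm.
  transitivity ((- 2 * Ci * RtoC s) * Cconj (/ 2 * delta_sum N D U + / 2 * Ci * delta_sum N D V))%C; [ceq|].
  transitivity (K * / 2 * delta_sum N D X + - (K * / 2 * Ci) * delta_sum N D Y)%C; [|ceq].
  rewrite !delta_sum_lin, delta_sum_conj, delta_sum_scal.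
  apply delta_sum_ext; intros a b c.
  transitivity (- 2 * Ci * RtoC s * Cconj (/ 2 * (U a b c + Ci * V a b c)))%C; [ceq|].
  rewrite Hterm; ceq.
Qed.

Section LatticeDerivatives.
Variables (N D a b c : Z) (x0 y0 u0 v0 : R).
Hypotheses (HN : (1 <= N)%Z) (HD : D <> 0%Z) (Hy0 : 0 < y0) (Hv0 : 0 < v0).
Let n := IZR N.
Let d := IZR (Z.abs D).
Let Hn : 0 < n. Proof. apply (IZR_lt 0); lia. Qed.
Let Hd : 0 < d. Proof. apply (IZR_lt 0); lia. Qed.

Lemma cderiv_lattice_phi_u :
  cderiv (fun s => lattice_sum (fun k1 k2 k3 => phi_term n d (IZR (a + D * k1)) (IZR (b + 2 * N * D * k2)) (IZR (c + D * k3)) x0 y0 s v0)) u0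
    (lattice_sum (fun k1 k2 k3 => phi_term_du n d (IZR (a + D * k1)) (IZR (b + 2 * N * D * k2)) (IZR (c + D * k3)) x0 y0 u0 v0))
  /\ lattice_summable (fun k1 k2 k3 => phi_term_du n d (IZR (a + D * k1)) (IZR (b + 2 * N * D * k2)) (IZR (c + D * k3)) x0 y0 u0 v0).
Proof.
  destruct (majorant_phi_u N D a b c x0 y0 v0 HN HD Hy0 Hv0) as [M [HM HB]].
  apply (cderiv_lattice_sum (fun k1 k2 k3 s => phi_term n d (IZR (a + D * k1)) (IZR (b + 2 * N * D * k2)) (IZR (c + D * k3)) x0 y0 s v0)
     (fun k1 k2 k3 s => phi_term_du n d (IZR (a + D * k1)) (IZR (b + 2 * N * D * k2)) (IZR (c + D * k3)) x0 y0 s v0) M u0 1); auto; try lra.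
  - intros; apply cderiv_phi_term_u; auto; lra.
  - intros; apply continuous_phi_term_du; auto; lra.
  - intros; apply continuous_phi_term_du; auto; lra.
  all: intros; apply (HB k1 k2 k3 s); auto.
Qed.

Lemma cderiv_lattice_phi_v :
  cderiv (fun s => lattice_sum (fun k1 k2 k3 => phi_term n d (IZR (a + D * k1)) (IZR (b + 2 * N * D * k2)) (IZR (c + D * k3)) x0 y0 u0 s)) v0
    (lattice_sum (fun k1 k2 k3 => phi_term_dv n d (IZR (a + D * k1)) (IZR (b + 2 * N * D * k2)) (IZR (c + D * k3)) x0 y0 u0 v0))
  /\ lattice_summable (fun k1 k2 k3 => phi_term_dv n d (IZR (a + D * k1)) (IZR (b + 2 * N * D * k2)) (IZR (c + D * k3)) x0 y0 u0 v0).
Proof.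
  destruct (majorant_phi_v N D a b c x0 y0 u0 v0 HN HD Hy0 Hv0) as [M [HM HB]].
  apply (cderiv_lattice_sum (fun k1 k2 k3 s => phi_term n d (IZR (a + D * k1)) (IZR (b + 2 * N * D * k2)) (IZR (c + D * k3)) x0 y0 u0 s)
     (fun k1 k2 k3 s => phi_term_dv n d (IZR (a + D * k1)) (IZR (b + 2 * N * D * k2)) (IZR (c + D * k3)) x0 y0 u0 s) M v0 (v0 / 2)); auto; try lra.
  - intros; apply cderiv_phi_term_v; auto; lra.
  - intros; apply continuous_phi_term_dv; auto; lra.
  - intros; apply continuous_phi_term_dv; auto; lra.
  all: intros; apply (HB k1 k2 k3 s); auto.
Qed.

Lemma cderiv_lattice_phiSh_x :
  cderiv (fun s => lattice_sum (fun k1 k2 k3 => phiSh_term n d (IZR (a + D * k1)) (IZR (b + 2 * N * D * k2)) (IZR (c + D * k3)) s y0 u0 v0)) x0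
    (lattice_sum (fun k1 k2 k3 => phiSh_term_dx n d (IZR (a + D * k1)) (IZR (b + 2 * N * D * k2)) (IZR (c + D * k3)) x0 y0 u0 v0))
  /\ lattice_summable (fun k1 k2 k3 => phiSh_term_dx n d (IZR (a + D * k1)) (IZR (b + 2 * N * D * k2)) (IZR (c + D * k3)) x0 y0 u0 v0).
Proof.
  destruct (majorant_phiSh_x N D a b c x0 y0 u0 v0 HN HD Hy0 Hv0) as [M [HM HB]].
  apply (cderiv_lattice_sum (fun k1 k2 k3 s => phiSh_term n d (IZR (a + D * k1)) (IZR (b + 2 * N * D * k2)) (IZR (c + D * k3)) s y0 u0 v0)
     (fun k1 k2 k3 s => phiSh_term_dx n d (IZR (a + D * k1)) (IZR (b + 2 * N * D * k2)) (IZR (c + D * k3)) s y0 u0 v0) M x0 1); auto; try lra.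
  - intros; apply cderiv_phiSh_term_x; auto; lra.
  - intros; apply continuous_phiSh_term_dx; auto; lra.
  - intros; apply continuous_phiSh_term_dx; auto; lra.
  all: intros; apply (HB k1 k2 k3 s); auto.
Qed.

Lemma cderiv_lattice_phiSh_y :
  cderiv (fun s => lattice_sum (fun k1 k2 k3 => phiSh_term n d (IZR (a + D * k1)) (IZR (b + 2 * N * D * k2)) (IZR (c + D * k3)) x0 s u0 v0)) y0
    (lattice_sum (fun k1 k2 k3 => phiSh_term_dy n d (IZR (a + D * k1)) (IZR (b + 2 * N * D * k2)) (IZR (c + D * k3)) x0 y0 u0 v0))
  /\ lattice_summable (fun k1 k2 k3 => phiSh_term_dy n d (IZR (a + D * k1)) (IZR (b + 2 * N * D * k2)) (IZR (c + D * k3)) x0 y0 u0 v0).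
Proof.
  destruct (majorant_phiSh_y N D a b c x0 y0 u0 v0 HN HD Hy0 Hv0) as [M [HM HB]].
  apply (cderiv_lattice_sum (fun k1 k2 k3 s => phiSh_term n d (IZR (a + D * k1)) (IZR (b + 2 * N * D * k2)) (IZR (c + D * k3)) x0 s u0 v0)
     (fun k1 k2 k3 s => phiSh_term_dy n d (IZR (a + D * k1)) (IZR (b + 2 * N * D * k2)) (IZR (c + D * k3)) x0 s u0 v0) M y0 (y0 / 2)); auto; try lra.
  - intros; apply cderiv_phiSh_term_y; auto; lra.
  - intros; apply continuous_phiSh_term_dy; auto; lra.
  - intros; apply continuous_phiSh_term_dy; auto; lra.
  all: intros; apply (HB k1 k2 k3 s); auto.
Qed.
End LatticeDerivatives.

Definition shifted_term (N D : Z) (G : R -> R -> R -> R -> R -> R -> R -> R -> R -> C) (x y u v : R) :=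
  fun a b c k1 k2 k3 => G (IZR N) (IZR (Z.abs D)) (IZR (a + D * k1)) (IZR (b + 2 * N * D * k2)) (IZR (c + D * k3)) x y u v.

Definition delta_deriv_term N D r h (G : R -> R -> R -> R -> R -> R -> R -> R -> R -> C) x y u v :=
  fun a b c => if excluded_middle_informative (delta_cond N D r h a b c)
     then (RtoC (IZR (chi N D a b c)) * lattice_sum (shifted_term N D G x y u v a b c))%C else RtoC 0.

Lemma RtoC_mult_swap (s : R) (p L : C) : (RtoC s * (p * L))%C = (p * (RtoC s * L))%C.
Proof. ceq. Qed.

Lemma Cconj_RtoC_mult_swap (s t : R) (L : C) :
  Cconj (RtoC s * (RtoC t * L))%C = (RtoC t * Cconj (RtoC s * L))%C.
Proof. ceq. Qed.

Lemma dR_Theta_phi_u N D r h x0 y0 u0 v0 : (1 <= N)%Z -> D <> 0%Z -> 0 < y0 -> 0 < v0 ->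
  dR (fun s => Theta N D r (phi N D) (s, v0) (x0, y0) h) u0 = delta_sum N D (delta_deriv_term N D r h phi_term_du x0 y0 u0 v0).
Proof.
  intros HN HD Hy Hv.
  rewrite (dR_ext_loc _ (fun s => delta_sum N D (delta_term N D r h (shifted_term N D phi_term x0 y0 s v0)))).
  2: { apply filter_forall. intros s. rewrite Theta_delta_sum. change (Im (s, v0)) with v0. rewrite delta_sum_scal.
       apply delta_sum_ext; intros a b c. unfold delta_term. destruct (excluded_middle_informative _).
       - rewrite RtoC_mult_swap, lattice_sum_scal_R. apply f_equal. apply lattice_sum_ext; intros. unfold shifted_term. apply phi_term_eq; auto.
       - ceq. }
  apply dR_cderiv. apply cderiv_delta_sum. intros a b c. unfold delta_deriv_term.
  apply (cderiv_delta_term N D r h (fun s => shifted_term N D phi_term x0 y0 s v0) (fun a b c => lattice_sum (shifted_term N D phi_term_du x0 y0 u0 v0 a b c))).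
  apply cderiv_lattice_phi_u; auto.
Qed.

Lemma dR_Theta_phi_v N D r h x0 y0 u0 v0 : (1 <= N)%Z -> D <> 0%Z -> 0 < y0 -> 0 < v0 ->
  dR (fun s => Theta N D r (phi N D) (u0, s) (x0, y0) h) v0 = delta_sum N D (delta_deriv_term N D r h phi_term_dv x0 y0 u0 v0).
Proof.
  intros HN HD Hy Hv.
  rewrite (dR_ext_loc _ (fun s => delta_sum N D (delta_term N D r h (shifted_term N D phi_term x0 y0 u0 s)))).
  2: { apply (filter_imp (fun s => 0 < s)); [|apply (open_gt 0); auto].
       intros s Hs. rewrite Theta_delta_sum. change (Im (u0, s)) with s. rewrite delta_sum_scal.
       apply delta_sum_ext; intros a b c. unfold delta_term. destruct (excluded_middle_informative _).
       - rewrite RtoC_mult_swap, lattice_sum_scal_R. apply f_equal. apply lattice_sum_ext; intros. unfold shifted_term. apply phi_term_eq; auto.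
       - ceq. }
  apply dR_cderiv. apply cderiv_delta_sum. intros a b c. unfold delta_deriv_term.
  apply (cderiv_delta_term N D r h (fun s => shifted_term N D phi_term x0 y0 u0 s) (fun a b c => lattice_sum (shifted_term N D phi_term_dv x0 y0 u0 v0 a b c))).
  apply cderiv_lattice_phi_v; auto.
Qed.

Lemma dR_Theta_phiSh_x N D r h x0 y0 u0 v0 : (1 <= N)%Z -> D <> 0%Z -> 0 < y0 -> 0 < v0 ->
  dR (fun s => Cconj (Theta N D r (phiSh N D) (u0, v0) (s, y0) h)) x0 = delta_sum N D (delta_deriv_term N D r h phiSh_term_dx x0 y0 u0 v0).
Proof.
  intros HN HD Hy Hv.
  rewrite (dR_ext_loc _ (fun s => delta_sum N D (delta_term N D r h (shifted_term N D phiSh_term s y0 u0 v0)))).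
  2: { apply filter_forall. intros s. rewrite Theta_delta_sum. change (Im (u0, v0)) with v0. rewrite delta_sum_scal, delta_sum_conj.
       apply delta_sum_ext; intros a b c. unfold delta_term. destruct (excluded_middle_informative _).
       - rewrite Cconj_RtoC_mult_swap, lattice_sum_scal_R, lattice_sum_conj. apply f_equal. apply lattice_sum_ext; intros. unfold shifted_term. apply phiSh_term_eq; auto.
       - ceq. }
  apply dR_cderiv. apply cderiv_delta_sum. intros a b c. unfold delta_deriv_term.
  apply (cderiv_delta_term N D r h (fun s => shifted_term N D phiSh_term s y0 u0 v0) (fun a b c => lattice_sum (shifted_term N D phiSh_term_dx x0 y0 u0 v0 a b c))).
  apply cderiv_lattice_phiSh_x; auto.
Qed.

Lemma dR_Theta_phiSh_y N D r h x0 y0 u0 v0 : (1 <= N)%Z -> D <> 0%Z -> 0 < y0 -> 0 < v0 ->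
  dR (fun s => Cconj (Theta N D r (phiSh N D) (u0, v0) (x0, s) h)) y0 = delta_sum N D (delta_deriv_term N D r h phiSh_term_dy x0 y0 u0 v0).
Proof.
  intros HN HD Hy Hv.
  rewrite (dR_ext_loc _ (fun s => delta_sum N D (delta_term N D r h (shifted_term N D phiSh_term x0 s u0 v0)))).
  2: { apply (filter_imp (fun s => 0 < s)); [|apply (open_gt 0); auto].
       intros s Hs. rewrite Theta_delta_sum. change (Im (u0, v0)) with v0. rewrite delta_sum_scal, delta_sum_conj.
       apply delta_sum_ext; intros a b c. unfold delta_term. destruct (excluded_middle_informative _).
       - rewrite Cconj_RtoC_mult_swap, lattice_sum_scal_R, lattice_sum_conj. apply f_equal. apply lattice_sum_ext; intros. unfold shifted_term. apply phiSh_term_eq; auto.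
       - ceq. }
  apply dR_cderiv. apply cderiv_delta_sum. intros a b c. unfold delta_deriv_term.
  apply (cderiv_delta_term N D r h (fun s => shifted_term N D phiSh_term x0 s u0 v0) (fun a b c => lattice_sum (shifted_term N D phiSh_term_dy x0 y0 u0 v0 a b c))).
  apply cderiv_lattice_phiSh_y; auto.
Qed.

Lemma fund_disc_neq0 D : fund_disc D -> D <> 0%Z.
Proof. intros [[H1 _]|[m [-> [H2 _]]]] E.
  - subst. simpl in H1. discriminate.
  - assert (m = 0)%Z by lia. subst. simpl in H2. destruct H2; discriminate. Qed.

Lemma delta_deriv_term_wirtinger N D r h x0 y0 u0 v0 a b c :
  (1 <= N)%Z -> D <> 0%Z -> 0 < y0 -> 0 < v0 ->
  (- 2 * Ci * RtoC (sqrt v0) *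
   Cconj (/ 2 * (delta_deriv_term N D r h phi_term_du x0 y0 u0 v0 a b c +
                 Ci * delta_deriv_term N D r h phi_term_dv x0 y0 u0 v0 a b c)))%C =
  (4 * Ci * RtoC (sqrt (IZR N)) * RtoC (y0 ^ 2) *
   (/ 2 * (delta_deriv_term N D r h phiSh_term_dx x0 y0 u0 v0 a b c -
           Ci * delta_deriv_term N D r h phiSh_term_dy x0 y0 u0 v0 a b c)))%C.
Proof.
  intros HN HD Hy Hv. unfold delta_deriv_term.
  destruct (excluded_middle_informative _); [|ceq].
  set (K := (4 * Ci * RtoC (sqrt (IZR N)) * RtoC (y0 ^ 2))%C).
  set (Lu := lattice_sum (shifted_term N D phi_term_du x0 y0 u0 v0 a b c)).
  set (Lv := lattice_sum (shifted_term N D phi_term_dv x0 y0 u0 v0 a b c)).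
  set (Lx := lattice_sum (shifted_term N D phiSh_term_dx x0 y0 u0 v0 a b c)).
  set (Ly := lattice_sum (shifted_term N D phiSh_term_dy x0 y0 u0 v0 a b c)).
  set (chiv := IZR (chi N D a b c)).
  transitivity (RtoC chiv * (- 2 * Ci * RtoC (sqrt v0) * Cconj (/ 2 * (Lu + Ci * Lv))))%C; [ceq|].
  transitivity (RtoC chiv * (K * (/ 2 * (Lx - Ci * Ly))))%C; [|ceq].
  f_equal. unfold Lu, Lv, Lx, Ly.
  apply lattice_sum_wirtinger.
  - apply cderiv_lattice_phi_u; auto.
  - apply cderiv_lattice_phi_v; auto.
  - apply cderiv_lattice_phiSh_x; auto.
  - apply cderiv_lattice_phiSh_y; auto.
  - intros k1 k2 k3. unfold shifted_term. apply xi_term_eq_dz_term; auto; apply (IZR_lt 0); lia.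
Qed.

Theorem lemma1 (N D r : Z) (HN : (1 <= N)%Z) (HD : fund_disc D)
  (Hr : (4 * N | D - r * r)%Z) (tau z : C) (Htau : (0 < Im tau)%R) (Hz : (0 < Im z)%R)
  (h : Z) (Hh : (0 <= h < 2 * N)%Z) :
  xi_half (fun t => Theta N D r (phi N D) t z h) tau =
  (4 * Ci * RtoC (sqrt (IZR N)) * RtoC (Im z ^ 2) *
   dhol (fun w => Cconj (Theta N D r (phiSh N D) tau w h)) z)%C.
Proof.
  destruct tau as [u0 v0], z as [x0 y0]; simpl in Htau, Hz.
  pose proof (fund_disc_neq0 D HD) as HD0.
  unfold xi_half, dbar, dhol; simpl Re; simpl Im.
  rewrite (dR_Theta_phi_u N D r h x0 y0 u0 v0), (dR_Theta_phi_v N D r h x0 y0 u0 v0),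
    (dR_Theta_phiSh_x N D r h x0 y0 u0 v0), (dR_Theta_phiSh_y N D r h x0 y0 u0 v0) by auto.
  apply delta_sum_wirtinger; intros a b c.
  apply delta_deriv_term_wirtinger; auto.
Qed.
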